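(* Under the standing assumptions below: 1. If there exists $d<2$ such that $(n^da_n)_{n\in\mathbb{N}}$ is eventually monotonically increasing, then, regardless of $b\in X$ (with all $b_n\ne 0$), there is no $\lambda\in c_H$ for which $k(\lambda)$ is well defined and belongs to $\ell^\infty$. 2. If there exists $d>2$ such that $(n^da_n)_{n\in\mathbb{N}}$ is eventually monotonically decreasing and $\ln(a_n/|b_n|)=o(n)$ as $n\to\infty$, then for every $\lambda\in c_H$ with $\lambda_n/a_n\to0$, we have $k(\lambda)\in\ell^1$.
   Context: $X$ is one of $\ell^p$ ($1\le p\le\infty$), $c$, $c_0$. Standing assumptions: $a=(a_n)$ strictly decreasing positive reals with $a_n\to 0$; $b=(b_n)\in X$ with $b_n\neq0$ for all $n$. $H:=\{z\in\mathbb{C}\mid\operatorname{re} z\le0\}$, $c_H:=\{(\lambda_n)\in c_0\mid\lambda_n\in H\ \forall n\}$. For $\lambda\in c_H$, $$k_n(\lambda):=-\frac{a_n-\lambda_n}{b_n}\prod_{m\ge1,\,m\neq n}\frac{1-\lambda_m/a_n}{1-a_m/a_n}.$$ A real sequence $(x_n)$ is eventually monotonically increasing (decreasing) if it is monotonically increasing (decreasing) for all $n\ge N$ for some $N$. *)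

From Stdlib Require Import Reals.
From Coquelicot Require Export Coquelicot.
Open Scope R_scope.

(* Indexing convention: the paper's sequences (x_n)_{n>=1} are represented by
   Rocq functions x : nat -> _ with  x k  standing for x_{k+1}. *)

Definition cseq_lim (u : nat -> C) (l : C) : Prop :=
  filterlim u eventually (locally l).

Definition abs_pow (x : R) (p : R) : R :=
  if Req_EM_T (Rabs x) 0 then 0 else Rpower (Rabs x) p.

Inductive seq_space : Type :=
  | SLp (p : R)
  | SLinf
  | Sc
  | Sc0.

Definition valid_space (X : seq_space) : Prop :=
  match X with SLp p => 1 <= p | _ => True end.

Definition cbounded (b : nat -> C) : Prop := exists M, forall n, Cmod (b n) <= M.

Definition in_space (X : seq_space) (b : nat -> C) : Prop :=
  match X with
  | SLp p => ex_series (fun n => abs_pow (Cmod (b n)) p)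
  | SLinf => cbounded b
  | Sc => exists l, cseq_lim b l
  | Sc0 => cseq_lim b 0
  end.

Definition in_cH (lam : nat -> C) : Prop :=
  cseq_lim lam 0 /\ forall n, Re (lam n) <= 0.

Fixpoint cprod (f : nat -> C) (N : nat) : C :=
  match N with
  | O => 1%C
  | S N' => (cprod f N' * f N')%C
  end.

Definition kfactor (a : nat -> R) (lam : nat -> C) (n m : nat) : C :=
  if Nat.eq_dec m n then 1%C
  else ((1 - lam m / RtoC (a n)) / (1 - RtoC (a m / a n)))%C.

Definition k_is (a : nat -> R) (b lam : nat -> C) (n : nat) (v : C) : Prop :=
  exists P : C, cseq_lim (cprod (kfactor a lam n)) P /\
    v = (- ((RtoC (a n) - lam n) / b n) * P)%C.

Definition eventually_incr (x : nat -> R) : Prop :=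
  exists N, forall n m, (N <= n)%nat -> (n <= m)%nat -> x n <= x m.
Definition eventually_decr (x : nat -> R) : Prop :=
  exists N, forall n m, (N <= n)%nat -> (n <= m)%nat -> x m <= x n.

(* the sequence n^d a_n (paper index n = k+1) *)
Definition pow_seq (d : R) (a : nat -> R) (k : nat) : R := Rpower (INR (S k)) d * a k.

Definition std_a (a : nat -> R) : Prop :=
  (forall n, 0 < a n) /\ (forall n m, (n < m)%nat -> a m < a n) /\ is_lim_seq a 0.

From Stdlib Require Import Reals Lra Lia IndefiniteDescription.
From Coquelicot Require Import Coquelicot.
Open Scope R_scope.

(* Write [|k_n| = |a_n - lam_n| / |b_n| * prod_(m <> n) |1 - lam_m / a_n| / |1 - a_m / a_n|]
   and compare each factor with the factor [(m+1)^2 / |(m+1)^2 - (n+1)^2|] obtained for the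
   model sequence [a_m = (m+1)^-2], [lam = 0].  The model product is an explicit ratio of
   factorials: it tends to 2, and its partial products stay between 2/3 and 2.

   If [n^d a_n] eventually increases with [d < 2], then [Re lam_m <= 0] makes every factor at
   least [1 / |1 - a_m / a_n|], and for [m < n/2] this exceeds the model factor by
   [2^(2-d) > 1].  Hence [|k_n| >= c n^-D 2^((2-d) n / 2)] is unbounded, since [b] is bounded.

   If [n^d a_n] eventually decreases with [d > 2] and [lam_m = o(a_m)], put
   [kappa = (d-2) ln 2].  Compared with the model, the factors with [n/L <= m < n/2] lose
   [e^(-kappa/2)], those with [n/2 <= m < n] gain at most [e^(kappa/16)], and those with
   [m > n] gain at most [e^(eps (n+1)^2/(m+1)^2)].  The first [K = n/L] factors are bounded
   only crudely, by [O(L^-d)] for large [m]; against the model this costs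
   [((n+1)^K / K!)^2 <= (2 L e)^(2K)], which [L^-d] absorbs once [L^(d-2)] is large.  So
   the product is [O(e^(-5 kappa n / 64))], while [a_n / |b_n| = e^(o(n))]: [k] decays
   geometrically. *)

Lemma Rpower_pos x y : 0 < Rpower x y.
Proof. apply exp_pos. Qed.

Lemma Rpower_1_l y : Rpower 1 y = 1.
Proof. unfold Rpower. now rewrite ln_1, Rmult_0_r, exp_0. Qed.

Lemma Rpower_div x y d : 0 < x -> 0 < y -> Rpower (x / y) d = Rpower x d / Rpower y d.
Proof.
  intros Hx Hy. unfold Rpower, Rdiv.
  rewrite ln_mult, ln_Rinv, <- exp_Ropp, <- exp_plus by (auto; now apply Rinv_0_lt_compat).
  f_equal; ring.
Qed.

Lemma Rpower_inv_l x e : 0 < x -> Rpower (/ x) e = / Rpower x e.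
Proof. intros Hx. unfold Rpower. rewrite ln_Rinv, <- exp_Ropp by auto. f_equal; ring. Qed.

Lemma Rpower_sq_mul x d : 0 < x -> Rpower x d = x ^ 2 * Rpower x (d - 2).
Proof.
  intros Hx. replace d with (INR 2 + (d - 2)) at 1 by (simpl; ring).
  now rewrite Rpower_plus, Rpower_pow.
Qed.

Lemma Rle_Rpower_l_neg x y e : e <= 0 -> 0 < x <= y -> Rpower y e <= Rpower x e.
Proof.
  intros He Hxy. replace e with (- - e) by ring. rewrite (Rpower_Ropp y), (Rpower_Ropp x).
  apply Rinv_le_contravar; [apply Rpower_pos|]. apply Rle_Rpower_l; lra.
Qed.

Lemma Rpower_le_1 x e : 0 <= e -> 0 < x <= 1 -> Rpower x e <= 1.
Proof. intros. rewrite <- (Rpower_1_l e). now apply Rle_Rpower_l. Qed.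

Lemma Rpower_ge_1 x e : e <= 0 -> 0 < x <= 1 -> 1 <= Rpower x e.
Proof. intros. rewrite <- (Rpower_1_l e). now apply Rle_Rpower_l_neg. Qed.

Lemma exp_le_exp x y : x <= y -> exp x <= exp y.
Proof. intros [H | ->]; [left; now apply exp_increasing | lra]. Qed.

Lemma exp_pow x k : exp x ^ k = exp (INR k * x).
Proof.
  induction k as [|k IH]; simpl pow; [now rewrite Rmult_0_l, exp_0|].
  rewrite IH, S_INR, <- exp_plus. f_equal; ring.
Qed.

Lemma ln_le_sub_1 x : 0 < x -> ln x <= x - 1.
Proof. intros Hx. generalize (exp_ineq1_le (ln x)). rewrite exp_ln; lra. Qed.

Lemma ln_nonneg x : 1 <= x -> 0 <= ln x.
Proof.
  intros [H | <-]; [|rewrite ln_1; lra]. rewrite <- ln_1. left; apply ln_increasing; lra.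
Qed.

Lemma pow_1_add_inv_le_exp_1 k : (0 < k)%nat -> (1 + / INR k) ^ k <= exp 1.
Proof.
  intros Hk. assert (Hk' : 0 < INR k) by now apply lt_0_INR.
  assert (0 < / INR k) by now apply Rinv_0_lt_compat.
  apply Rle_trans with (exp (/ INR k) ^ k).
  - apply pow_incr. split; [lra | apply exp_ineq1_le].
  - rewrite exp_pow. right. f_equal. field. lra.
Qed.

Definition factR (k : nat) : R := INR (Factorial.fact k).

Lemma factR_S k : factR (S k) = INR (S k) * factR k.
Proof. unfold factR. now rewrite fact_simpl, mult_INR. Qed.

Lemma factR_pos k : 0 < factR k.
Proof. apply INR_fact_lt_0. Qed.

Lemma pow_le_exp_mul_factR k : INR k ^ k <= exp (INR k) * factR k.
Proof.
  induction k as [|k IH]; [simpl; unfold factR; simpl; rewrite exp_0; lra|].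
  assert (Hk : (INR k + 1) ^ k <= exp 1 * INR k ^ k).
  { destruct k as [|k]; [simpl; generalize (exp_ineq1_le 1); lra|].
    assert (0 < INR (S k)) by (apply lt_0_INR; lia).
    replace ((INR (S k) + 1) ^ S k) with (INR (S k) ^ S k * (1 + / INR (S k)) ^ S k)
      by (rewrite <- Rpow_mult_distr; f_equal; field; lra).
    rewrite Rmult_comm. apply Rmult_le_compat_r; [apply pow_le; lra|].
    apply pow_1_add_inv_le_exp_1; lia. }
  rewrite S_INR, factR_S, S_INR, exp_plus. simpl pow.
  assert (0 <= INR k) by apply pos_INR. assert (0 < exp 1) by apply exp_pos.
  assert (0 <= INR k ^ k) by (apply pow_le; lra).
  apply Rle_trans with ((INR k + 1) * (exp 1 * INR k ^ k)); [apply Rmult_le_compat_l; lra|].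
  apply Rle_trans with ((INR k + 1) * (exp 1 * (exp (INR k) * factR k))); [|right; ring].
  apply Rmult_le_compat_l; [lra|]. apply Rmult_le_compat_l; lra.
Qed.

(** * Finite and infinite products *)

Fixpoint rprod (f : nat -> R) (N : nat) : R :=
  match N with O => 1 | S N' => rprod f N' * f N' end.

Fixpoint rsum (f : nat -> R) (N : nat) : R :=
  match N with O => 0 | S N' => rsum f N' + f N' end.

Lemma Cmod_cprod f N : Cmod (cprod f N) = rprod (fun m => Cmod (f m)) N.
Proof. induction N; simpl; [apply Cmod_1 | now rewrite Cmod_mult, IHN]. Qed.

Lemma rprod_nonneg f N : (forall m, (m < N)%nat -> 0 <= f m) -> 0 <= rprod f N.
Proof. induction N; simpl; intros H; [lra | apply Rmult_le_pos; auto]. Qed.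

Lemma rprod_pos f N : (forall m, (m < N)%nat -> 0 < f m) -> 0 < rprod f N.
Proof. induction N; simpl; intros H; [lra | apply Rmult_lt_0_compat; auto]. Qed.

Lemma rprod_ge_1 f N : (forall m, (m < N)%nat -> 1 <= f m) -> 1 <= rprod f N.
Proof.
  induction N; simpl; intros H; [lra|].
  assert (1 <= rprod f N) by auto. assert (1 <= f N) by auto. nra.
Qed.

Lemma rprod_le f g N :
  (forall m, (m < N)%nat -> 0 <= f m <= g m) -> rprod f N <= rprod g N.
Proof.
  induction N; simpl; intros H; [lra|].
  apply Rmult_le_compat; try apply H; auto.
  apply rprod_nonneg; intros; apply H; lia.
Qed.

Lemma rprod_mul f g N : rprod (fun m => f m * g m) N = rprod f N * rprod g N.
Proof. induction N; simpl; [ring | rewrite IHN; ring]. Qed.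

Lemma rprod_ext f g N : (forall m, (m < N)%nat -> f m = g m) -> rprod f N = rprod g N.
Proof. induction N; simpl; intros H; auto. rewrite IHN, H; auto. Qed.

Lemma rprod_add f a N : rprod f (a + N) = rprod f a * rprod (fun i => f (a + i)%nat) N.
Proof.
  induction N; simpl; [rewrite Nat.add_0_r; ring|].
  rewrite Nat.add_succ_r; simpl; rewrite IHN; ring.
Qed.

Lemma rprod_const c N : rprod (fun _ => c) N = c ^ N.
Proof. induction N; simpl; auto. rewrite IHN; ring. Qed.

Lemma rprod_blocks A B M al be : (A <= B)%nat -> (B <= M)%nat ->
  rprod (fun m => if (m <? A)%nat then al else if (m <? B)%nat then be else 1) M
  = al ^ A * be ^ (B - A).
Proof.
  intros H1 H2. replace M with (A + ((B - A) + (M - B)))%nat by lia.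
  rewrite !rprod_add.
  rewrite (rprod_ext _ (fun _ => al)), (rprod_ext _ (fun _ => be) (B - A)),
    (rprod_ext _ (fun _ => 1) (M - B)), !rprod_const, pow1; [ring| intros m Hm ..];
  repeat match goal with |- context [(?x <? ?y)%nat] =>
    destruct (Nat.ltb_spec x y); try lia end; reflexivity.
Qed.

Lemma rsum_add f a N : rsum f (a + N) = rsum f a + rsum (fun i => f (a + i)%nat) N.
Proof.
  induction N; simpl; [rewrite Nat.add_0_r; ring|].
  rewrite Nat.add_succ_r; simpl; rewrite IHN; ring.
Qed.

Lemma rsum_ext f g N : (forall m, (m < N)%nat -> f m = g m) -> rsum f N = rsum g N.
Proof. induction N; simpl; intros H; auto. rewrite IHN, H; auto. Qed.

Lemma rsum_const c N : rsum (fun _ => c) N = c * INR N.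
Proof. induction N; [simpl; ring|]. rewrite S_INR; simpl; rewrite IHN; ring. Qed.

Lemma rsum_scal c f N : rsum (fun m => c * f m) N = c * rsum f N.
Proof. induction N; simpl; [ring | rewrite IHN; ring]. Qed.

Lemma rsum_nonneg f N : (forall i, 0 <= f i) -> 0 <= rsum f N.
Proof. intros Hf. induction N; simpl; [lra | specialize (Hf N); lra]. Qed.

Lemma rsum_ge_term f N m : (forall i, 0 <= f i) -> (m < N)%nat -> f m <= rsum f N.
Proof.
  intros Hf. induction N; intros H; [lia|]. simpl.
  destruct (Nat.eq_dec m N) as [->|]; [generalize (rsum_nonneg f N Hf); lra|].
  assert (f m <= rsum f N) by (apply IHN; lia). specialize (Hf N). lra.
Qed.

Lemma rsum_sum_n g n : rsum g (S n) = sum_n g n.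
Proof.
  induction n; [simpl; rewrite sum_O; ring|].
  rewrite sum_Sn. change (rsum g (S n) + g (S n) = plus (sum_n g n) (g (S n))).
  now rewrite IHn.
Qed.

Lemma rsum_le_series g l : (forall n, 0 <= g n) -> is_series g l -> forall M, rsum g M <= l.
Proof.
  intros Hg Hl M.
  assert (Hincr : forall N, sum_n g N <= l).
  { apply (is_lim_seq_incr_compare (sum_n g) l Hl). intros n. rewrite sum_Sn.
    specialize (Hg (S n)). unfold plus; simpl; lra. }
  destruct M; [simpl; specialize (Hincr O); rewrite sum_O in Hincr; specialize (Hg O); lra|].
  rewrite rsum_sum_n. apply Hincr.
Qed.

Lemma rprod_exp g N : rprod (fun m => exp (g m)) N = exp (rsum g N).
Proof. induction N; simpl; [now rewrite exp_0 | now rewrite IHN, exp_plus]. Qed.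

Lemma cseq_lim_Cmod u l : cseq_lim u l -> is_lim_seq (fun n => Cmod (u n)) (Cmod l).
Proof.
  intros H. pose (V := prod_NormedModule R_AbsRing R_NormedModule R_NormedModule).
  assert (E : forall x : C, Cmod x = @norm R_AbsRing V x) by apply Cmod_norm.
  unfold is_lim_seq. rewrite E. apply (filterlim_ext (fun n => @norm _ V (u n))).
  - intros n; now rewrite E.
  - eapply filterlim_comp; [apply H | apply (@filterlim_norm _ V)].
Qed.

Lemma cseq_lim_Cmod_le u l U :
  cseq_lim u l -> (exists N, forall M, (N <= M)%nat -> Cmod (u M) <= U) -> Cmod l <= U.
Proof.
  intros H HN.
  enough (Rbar_le (Cmod l) U) by easy.
  eapply is_lim_seq_le_loc; [exact HN | apply cseq_lim_Cmod, H | apply is_lim_seq_const].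
Qed.

Lemma cseq_lim_Cmod_ge u l U :
  cseq_lim u l -> (exists N, forall M, (N <= M)%nat -> U <= Cmod (u M)) -> U <= Cmod l.
Proof.
  intros H HN.
  enough (Rbar_le U (Cmod l)) by easy.
  eapply is_lim_seq_le_loc; [exact HN | apply is_lim_seq_const | apply cseq_lim_Cmod, H].
Qed.

Lemma cseq_lim_shift (u : nat -> C) l : cseq_lim (fun n => u (S n)) l -> cseq_lim u l.
Proof.
  intros H P HP. destruct (H P HP) as [N HN]. exists (S N).
  intros [|n] Hn; [lia | apply HN; lia].
Qed.

Lemma Cmod_le_1_add (z : C) : Cmod z <= 1 + Cmod (z - 1).
Proof.
  replace z with ((z - 1) + 1)%C at 1 by ring.
  eapply Rle_trans; [apply Cmod_triangle | rewrite Cmod_1; lra].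
Qed.

(* The partial products are bounded by [exp (sum |f m - 1|)], so their increments
   [cprod f M * (f M - 1)] form an absolutely summable series. *)
Lemma ex_lim_cprod (f : nat -> C) :
  ex_series (fun m => Cmod (f m - 1)%C) -> exists P, cseq_lim (cprod f) P.
Proof.
  intros [l Hl].
  assert (Hb : forall M, Cmod (cprod f M) <= exp l).
  { intros M. rewrite Cmod_cprod.
    apply Rle_trans with (rprod (fun m => exp (Cmod (f m - 1)%C)) M).
    - apply rprod_le. intros m _; split; [apply Cmod_ge_0|].
      eapply Rle_trans; [apply Cmod_le_1_add | apply exp_ineq1_le].
    - rewrite rprod_exp. apply exp_le_exp.
      apply (rsum_le_series (fun m => Cmod (f m - 1)%C)); auto using Cmod_ge_0. }
  set (D := fun M => (cprod f (S M) - cprod f M)%C).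
  destruct (@ex_series_le C_AbsRing C_CompleteNormedModule D
              (fun M => exp l * Cmod (f M - 1)%C)) as [L HL].
  { intros M. change (Cmod (cprod f M * f M - cprod f M) <= exp l * Cmod (f M - 1)).
    replace (cprod f M * f M - cprod f M)%C with (cprod f M * (f M - 1))%C by ring.
    rewrite Cmod_mult. apply Rmult_le_compat_r; [apply Cmod_ge_0 | apply Hb]. }
  { exists (exp l * l). now apply (@is_series_scal_l R_AbsRing R_NormedModule). }
  exists (L + 1)%C. apply cseq_lim_shift.
  assert (E : forall M, sum_n D M = (cprod f (S M) - 1)%C).
  { induction M; [rewrite sum_O | rewrite sum_Sn, IHM]; unfold D, plus; simpl; ring. }
  apply (filterlim_ext (fun M => plus (sum_n D M) (RtoC 1))).
  { intros M. rewrite E. unfold plus; simpl; ring. }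
  change (filterlim (fun M => plus (sum_n D M) (RtoC 1)) eventually
            (locally (@plus C_AbelianGroup L (RtoC 1)))).
  eapply filterlim_comp_2; [apply HL | apply filterlim_const |].
  apply (@filterlim_plus C_AbsRing C_NormedModule).
Qed.

(** * The model product *)

Lemma ratio_S_lt_1 m n : (m < n)%nat -> 0 < INR (S m) / INR (S n) < 1.
Proof.
  intros H. assert (0 < INR (S m)) by (apply lt_0_INR; lia).
  assert (INR (S m) < INR (S n)) by (apply lt_INR; lia).
  split; [apply Rdiv_lt_0_compat | apply (Rmult_lt_reg_r (INR (S n)));
    [| unfold Rdiv; rewrite Rmult_assoc, Rinv_l]]; lra.
Qed.

(* [qfactor n m = 1 / |1 - a m / a n|] for the model sequence [a k = (k+1)^-2]: the
   modulus of [kfactor a 0 n m] there. *)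
Definition qfactor (n m : nat) : R :=
  if Nat.eq_dec m n then 1 else INR (S m) ^ 2 / Rabs (INR (S m) ^ 2 - INR (S n) ^ 2).

Lemma qfactor_lt n m : (m < n)%nat ->
  qfactor n m = (INR (S m) / INR (S n)) ^ 2 / (1 - (INR (S m) / INR (S n)) ^ 2).
Proof.
  intros H. unfold qfactor. destruct (Nat.eq_dec m n); [lia|].
  assert (0 < INR (S m)) by (apply lt_0_INR; lia).
  assert (INR (S m) < INR (S n)) by (apply lt_INR; lia).
  rewrite Rabs_left by nra. field. split; nra.
Qed.

Lemma qfactor_gt n m : (n < m)%nat ->
  qfactor n m = 1 / (1 - (INR (S n) / INR (S m)) ^ 2).
Proof.
  intros H. unfold qfactor. destruct (Nat.eq_dec m n); [lia|].
  assert (0 < INR (S n)) by (apply lt_0_INR; lia).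
  assert (INR (S n) < INR (S m)) by (apply lt_INR; lia).
  rewrite Rabs_right by nra. field. split; nra.
Qed.

Lemma qfactor_pos n m : 0 < qfactor n m.
Proof.
  destruct (Nat.lt_total m n) as [H | [-> | H]].
  - rewrite qfactor_lt by auto.
    assert (H' := ratio_S_lt_1 m n H).
    apply Rdiv_lt_0_compat; nra.
  - unfold qfactor. destruct (Nat.eq_dec n n); lra || lia.
  - rewrite qfactor_gt by auto.
    assert (H' := ratio_S_lt_1 n m H).
    apply Rdiv_lt_0_compat; nra.
Qed.

Lemma qfactor_ge_sq n m : (m < n)%nat -> (INR (S m) / INR (S n)) ^ 2 <= qfactor n m.
Proof.
  intros H. rewrite qfactor_lt by auto.
  assert (H' := ratio_S_lt_1 m n H).
  set (x := INR (S m) / INR (S n)) in *. assert (0 < x ^ 2 < 1) by (split; nra).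
  apply (Rmult_le_reg_r (1 - x ^ 2)); [lra|].
  unfold Rdiv. rewrite Rmult_assoc, Rinv_l by lra. nra.
Qed.

Lemma qprod_below i j : rprod (qfactor (i + j)) i =
  factR i ^ 2 * factR j * factR (i + j + 1) / (factR (i + j) * factR (2 * i + j + 1)).
Proof.
  revert j; induction i as [|i IH]; intros j.
  - simpl rprod. replace (2 * 0 + j + 1)%nat with (0 + j + 1)%nat by lia.
    unfold factR at 1; simpl (INR _). simpl (0 + j)%nat.
    field. split; apply Rgt_not_eq, factR_pos.
  - change (rprod (qfactor (S i + j)) (S i))
      with (rprod (qfactor (S i + j)) i * qfactor (S i + j) i).
    replace (S i + j)%nat with (i + S j)%nat by lia. rewrite IH.
    unfold qfactor. destruct (Nat.eq_dec i (i + S j)); [lia|].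
    replace (i + S j + 1)%nat with (S i + j + 1)%nat by lia.
    replace (2 * S i + j + 1)%nat with (S (2 * i + S j + 1)) by lia.
    rewrite (factR_S (2 * i + S j + 1)), (factR_S i), (factR_S j).
    replace (i + S j)%nat with (S i + j)%nat by lia.
    assert (Hi := pos_INR i). assert (Hj := pos_INR j).
    rewrite Rabs_left by (rewrite !S_INR, plus_INR, S_INR; nra).
    repeat rewrite ?S_INR, ?plus_INR, ?mult_INR. simpl (INR 2). simpl (INR 0).
    assert (H1 := factR_pos (S i + j + 1)). assert (H2 := factR_pos (S i + j)).
    assert (H3 := factR_pos (2 * i + S j + 1)).
    field. repeat split; try lra; nra.
Qed.

Lemma qprod_above n j :
  rprod (qfactor n) (n + 1 + j) = 2 * factR (n + 1 + j) ^ 2 / (factR j * factR (2 * n + 2 + j)).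
Proof.
  assert (Hn := pos_INR n).
  induction j as [|j IH].
  - replace (n + 1 + 0)%nat with (S n) by lia.
    change (rprod (qfactor n) (S n)) with (rprod (qfactor n) n * qfactor n n).
    pose proof (qprod_below n 0) as H. rewrite Nat.add_0_r in H.
    replace (2 * n + 0 + 1)%nat with (2 * n + 1)%nat in H by lia. rewrite H.
    unfold qfactor. destruct (Nat.eq_dec n n); [|lia].
    replace (2 * n + 2 + 0)%nat with (S (2 * n + 1)) by lia.
    replace (n + 1)%nat with (S n) by lia.
    rewrite (factR_S (2 * n + 1)), (factR_S n).
    replace (factR 0) with 1 by (unfold factR; simpl; ring).
    assert (H1 := factR_pos n). assert (H2 := factR_pos (2 * n + 1)).
    rewrite !S_INR, !plus_INR, !mult_INR. simpl (INR 2).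
    change (INR 1) with 1. field. lra.
  - replace (n + 1 + S j)%nat with (S (n + 1 + j)) by lia.
    change (rprod (qfactor n) (S (n + 1 + j)))
      with (rprod (qfactor n) (n + 1 + j) * qfactor n (n + 1 + j)).
    rewrite IH. unfold qfactor. destruct (Nat.eq_dec (n + 1 + j) n); [lia|].
    replace (2 * n + 2 + S j)%nat with (S (2 * n + 2 + j)) by lia.
    rewrite (factR_S (2 * n + 2 + j)), (factR_S (n + 1 + j)), (factR_S j).
    assert (Hj := pos_INR j).
    rewrite Rabs_right by (rewrite !S_INR, !plus_INR; change (INR 1) with 1; nra).
    assert (H1 := factR_pos (n + 1 + j)). assert (H2 := factR_pos (2 * n + 2 + j)).
    assert (H3 := factR_pos j).
    repeat rewrite ?S_INR, ?plus_INR, ?mult_INR. simpl (INR 2). simpl (INR 0).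
    field. repeat split; try lra; nra.
Qed.

Lemma fact_add_mul_le k a b : (a <= b)%nat ->
  (Factorial.fact (a + k) * Factorial.fact b <= Factorial.fact (b + k) * Factorial.fact a)%nat.
Proof.
  intros Hab. induction k as [|k IH]; [rewrite !Nat.add_0_r; lia|].
  rewrite !Nat.add_succ_r, !fact_simpl.
  generalize dependent (Factorial.fact (a + k)). generalize dependent (Factorial.fact (b + k)).
  intros. nia.
Qed.

Lemma fact_add_pow_mul_le k a c : (c <= a)%nat ->
  (Factorial.fact (a + k) * Factorial.fact c * (c + 1) ^ k
   <= Factorial.fact (c + k) * Factorial.fact a * (a + 1) ^ k)%nat.
Proof.
  intros Hca. induction k as [|k IH]; [rewrite !Nat.add_0_r; simpl; lia|].
  replace (a + S k)%nat with (S (a + k)) by lia. replace (c + S k)%nat with (S (c + k)) by lia.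
  rewrite !fact_simpl, !Nat.pow_succ_r'.
  assert (Hm : (S (a + k) * (c + 1) <= S (c + k) * (a + 1))%nat) by nia.
  generalize dependent (Factorial.fact (a + k)). generalize dependent (Factorial.fact (c + k)).
  generalize dependent ((c + 1) ^ k)%nat. generalize dependent ((a + 1) ^ k)%nat.
  intros P Q X Y H. assert (H2 := Nat.mul_le_mono _ _ _ _ H Hm). nia.
Qed.

Lemma qprod_le_2 n M : (n + 1 <= M)%nat -> rprod (qfactor n) M <= 2.
Proof.
  intros HM. replace M with (n + 1 + (M - n - 1))%nat by lia.
  set (j := (M - n - 1)%nat). rewrite qprod_above.
  assert (H := fact_add_mul_le (n + 1) j (n + 1 + j) ltac:(lia)).
  replace (j + (n + 1))%nat with (n + 1 + j)%nat in H by lia.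
  replace (n + 1 + j + (n + 1))%nat with (2 * n + 2 + j)%nat in H by lia.
  apply le_INR in H. rewrite !mult_INR in H.
  fold (factR (n + 1 + j)) (factR j) (factR (2 * n + 2 + j)) in H.
  assert (H1 := factR_pos j). assert (H2 := factR_pos (2 * n + 2 + j)).
  apply Rmult_le_reg_r with (factR j * factR (2 * n + 2 + j)); [nra|].
  unfold Rdiv. rewrite Rmult_assoc, Rinv_l; nra.
Qed.

Lemma qprod_ge_2_3 n : 2 / 3 <= rprod (qfactor n) (n + 1 + n * (n + 2)).
Proof.
  rewrite qprod_above. set (j := (n * (n + 2))%nat). set (k := (n + 1)%nat).
  assert (Hk : 0 < INR k) by (apply lt_0_INR; unfold k; lia).
  (* with [j + 1 = k^2] the factorial inequality carries the factor [(1 + 1/k)^k <= e] *)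
  assert (Hfact : factR (2 * n + 2 + j) * factR j * (INR k * INR k) ^ k
                  <= factR (n + 1 + j) * factR (n + 1 + j) * (INR k * INR k) ^ k * exp 1).
  { assert (H := fact_add_pow_mul_le k (k + j) j ltac:(lia)).
    replace (k + j + k)%nat with (2 * n + 2 + j)%nat in H by (unfold k; lia).
    replace (j + k)%nat with (n + 1 + j)%nat in H by (unfold k; lia).
    replace (k + j)%nat with (n + 1 + j)%nat in H by (unfold k; lia).
    apply le_INR in H. rewrite !mult_INR, !pow_INR in H.
    fold (factR (n + 1 + j)) (factR j) (factR (2 * n + 2 + j)) in H.
    replace (INR (j + 1)) with (INR k * INR k) in H
      by (rewrite <- mult_INR; f_equal; unfold j, k; nia).
    replace (INR (n + 1 + j + 1)) with (INR k * INR k * (1 + / INR k)) in H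
      by (replace (n + 1 + j + 1)%nat with (k * (k + 1))%nat by (unfold j, k; nia);
          rewrite mult_INR, plus_INR; simpl (INR 1); field; lra).
    rewrite (Rpow_mult_distr (INR k * INR k)) in H. eapply Rle_trans; [apply H|].
    rewrite <- Rmult_assoc. apply Rmult_le_compat_l.
    - apply Rmult_le_pos; [generalize (factR_pos (n + 1 + j)); nra | apply pow_le; nra].
    - apply pow_1_add_inv_le_exp_1. unfold k; lia. }
  assert (He := exp_le_3). assert (Hq : 0 < (INR k * INR k) ^ k) by (apply pow_lt; nra).
  assert (H1 := factR_pos j). assert (H2 := factR_pos (2 * n + 2 + j)).
  assert (H3 := factR_pos (n + 1 + j)).
  assert (factR (2 * n + 2 + j) * factR j <= factR (n + 1 + j) * factR (n + 1 + j) * 3).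
  { apply Rmult_le_reg_r with ((INR k * INR k) ^ k); [auto|]. eapply Rle_trans; [apply Hfact|].
    generalize (Rmult_lt_0_compat _ _ (Rmult_lt_0_compat _ _ H3 H3) Hq). nra. }
  apply Rmult_le_reg_r with (factR j * factR (2 * n + 2 + j)); [nra|].
  unfold Rdiv. rewrite (Rmult_assoc (2 * _)), Rinv_l; [unfold k; nra | nra].
Qed.

Lemma Re_div_RtoC (z : C) r : r <> 0 -> Re (z / RtoC r) = Re z / r.
Proof. intros Hr. destruct z as [x y]. unfold Cdiv, Cinv, Cmult, Re, RtoC; simpl. field. auto. Qed.

Lemma Cmod_div_RtoC (z : C) r : 0 < r -> Cmod (z / RtoC r) = Cmod z / r.
Proof.
  intros Hr. rewrite Cmod_div, Cmod_R, Rabs_right; [lra..|].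
  intros H. apply (f_equal fst) in H. simpl in H. lra.
Qed.

Lemma Cmod_1_sub_RtoC r : Cmod (1 - RtoC r) = Rabs (1 - r).
Proof. now rewrite <- Cmod_R, <- RtoC_minus. Qed.

Lemma Cmod_RtoC_sub_ge r (l : C) : Re l <= 0 -> r <= Cmod (RtoC r - l).
Proof.
  intros H. eapply Rle_trans; [|apply re_le_Cmod]. eapply Rle_trans; [|apply Rle_abs].
  destruct l as [x y]. unfold Cminus, Cplus, Copp, RtoC, Re in *; simpl in *. lra.
Qed.

Lemma Cmod_k_is a (b lam : nat -> C) n v :
  b n <> 0%C -> k_is a b lam n v ->
  exists P, cseq_lim (cprod (kfactor a lam n)) P /\
            Cmod v = Cmod (RtoC (a n) - lam n) / Cmod (b n) * Cmod P.
Proof.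
  intros Hb [P [HP ->]]. exists P. split; auto.
  now rewrite Cmod_mult, Cmod_opp, Cmod_div.
Qed.

Lemma decreasing_injective (a : nat -> R) :
  (forall n m, (n < m)%nat -> a m < a n) -> forall n m, n <> m -> a n <> a m.
Proof.
  intros Hdec n m H E. destruct (Nat.lt_gt_cases n m) as [[Hlt|Hgt] _]; auto.
  - specialize (Hdec n m Hlt); lra.
  - specialize (Hdec m n Hgt); lra.
Qed.

Section KFactor.
Variables (a : nat -> R) (lam : nat -> C).
Hypothesis Ha : forall n, 0 < a n.
Hypothesis Hinj : forall n m, n <> m -> a n <> a m.

Lemma kfactor_diag n : kfactor a lam n n = 1%C.
Proof. unfold kfactor. now destruct (Nat.eq_dec n n). Qed.

Lemma Rabs_1_sub_ratio n m : Rabs (1 - a m / a n) = Rabs (a n - a m) / a n.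
Proof.
  assert (Hn := Ha n). replace (1 - a m / a n) with ((a n - a m) / a n) by (field; lra).
  rewrite Rabs_div, (Rabs_right (a n)); lra.
Qed.

Lemma Rabs_1_sub_ratio_pos n m : m <> n -> 0 < Rabs (1 - a m / a n).
Proof.
  intros Hmn. rewrite Rabs_1_sub_ratio. apply Rdiv_lt_0_compat; auto.
  apply Rabs_pos_lt. intros E. apply (Hinj m n); auto; lra.
Qed.

Lemma kfactor_denom_neq_0 n m : m <> n -> (1 - RtoC (a m / a n))%C <> 0%C.
Proof.
  intros Hmn E. apply (f_equal Cmod) in E. rewrite Cmod_1_sub_RtoC, Cmod_0 in E.
  generalize (Rabs_1_sub_ratio_pos n m Hmn). lra.
Qed.

Lemma Cmod_kfactor n m : m <> n ->
  Cmod (kfactor a lam n m) = Cmod (1 - lam m / RtoC (a n)) / (Rabs (a n - a m) / a n).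
Proof.
  intros Hmn. unfold kfactor. destruct (Nat.eq_dec m n); [tauto|].
  now rewrite Cmod_div, Cmod_1_sub_RtoC, Rabs_1_sub_ratio by now apply kfactor_denom_neq_0.
Qed.

Lemma Cmod_kfactor_ge n m : m <> n -> Re (lam m) <= 0 ->
  / Rabs (1 - a m / a n) <= Cmod (kfactor a lam n m).
Proof.
  intros Hmn Hre. rewrite Cmod_kfactor, <- Rabs_1_sub_ratio by auto.
  assert (Hpos := Rabs_1_sub_ratio_pos n m Hmn). assert (Hn := Ha n).
  assert (H1 : 1 <= Cmod (1 - lam m / RtoC (a n))).
  { eapply Rle_trans; [|apply re_le_Cmod]. eapply Rle_trans; [|apply Rle_abs].
    replace (Re (1 - lam m / RtoC (a n))) with (1 - Re (lam m / RtoC (a n)))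
      by (destruct (lam m / RtoC (a n))%C; unfold Cminus, Cplus, Copp, Re; simpl; ring).
    rewrite Re_div_RtoC by lra.
    enough (Re (lam m) / a n <= 0) by lra.
    apply Rmult_le_0_r; auto. left; now apply Rinv_0_lt_compat. }
  unfold Rdiv. rewrite <- (Rmult_1_l (/ Rabs _)) at 1.
  apply Rmult_le_compat_r; [left; now apply Rinv_0_lt_compat | auto].
Qed.

Lemma Cmod_kfactor_ge_1 n m : a m < a n -> Re (lam m) <= 0 -> 1 <= Cmod (kfactor a lam n m).
Proof.
  intros Hmn Hre. assert (m <> n) by (intros ->; lra).
  eapply Rle_trans; [|now apply Cmod_kfactor_ge].
  assert (Hn := Ha n). assert (Hm := Ha m).
  assert (0 < a m / a n < 1).
  { split; [now apply Rdiv_lt_0_compat|].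
    apply (Rmult_lt_reg_r (a n)); auto. unfold Rdiv; rewrite Rmult_assoc, Rinv_l; lra. }
  rewrite Rabs_right by lra. rewrite <- Rinv_1. apply Rinv_le_contravar; lra.
Qed.

Lemma Cmod_kfactor_le n m : m <> n ->
  Cmod (kfactor a lam n m) <= (a n + Cmod (lam m)) / Rabs (a n - a m).
Proof.
  intros Hmn. rewrite Cmod_kfactor by auto.
  assert (Hn := Ha n). assert (Hp : 0 < Rabs (a n - a m)).
  { apply Rabs_pos_lt. intros E. apply (Hinj n m); auto; lra. }
  assert (Cmod (1 - lam m / RtoC (a n)) <= 1 + Cmod (lam m) / a n).
  { unfold Cminus. eapply Rle_trans; [apply Cmod_triangle|].
    rewrite Cmod_opp, Cmod_1, Cmod_div_RtoC; lra. }
  apply Rle_trans with ((1 + Cmod (lam m) / a n) / (Rabs (a n - a m) / a n)).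
  - apply Rmult_le_compat_r; auto. left; apply Rinv_0_lt_compat, Rdiv_lt_0_compat; auto.
  - right. field. lra.
Qed.

Lemma Cmod_kfactor_sub_1_le n m : m <> n ->
  Cmod (kfactor a lam n m - 1) <= (a m + Cmod (lam m)) / Rabs (a n - a m).
Proof.
  intros Hmn. unfold kfactor. destruct (Nat.eq_dec m n); [tauto|].
  assert (Hd := kfactor_denom_neq_0 n m Hmn). assert (Hn := Ha n). assert (Hm := Ha m).
  replace ((1 - lam m / RtoC (a n)) / (1 - RtoC (a m / a n)) - 1)%C with
    ((RtoC (a m / a n) - lam m / RtoC (a n)) / (1 - RtoC (a m / a n)))%C
    by (field; repeat split; auto; intros E; apply (f_equal fst) in E; simpl in E; lra).
  rewrite Cmod_div, Cmod_1_sub_RtoC, Rabs_1_sub_ratio by auto.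
  assert (Hp : 0 < Rabs (a n - a m)).
  { apply Rabs_pos_lt. intros E. apply (Hinj n m); auto; lra. }
  assert (Cmod (RtoC (a m / a n) - lam m / RtoC (a n)) <= a m / a n + Cmod (lam m) / a n).
  { unfold Cminus. eapply Rle_trans; [apply Cmod_triangle|].
    rewrite Cmod_opp, Cmod_R, Cmod_div_RtoC by lra.
    rewrite Rabs_right; [lra | apply Rle_ge, Rdiv_le_0_compat; lra]. }
  apply Rle_trans with ((a m / a n + Cmod (lam m) / a n) / (Rabs (a n - a m) / a n)).
  - apply Rmult_le_compat_r; auto. left; apply Rinv_0_lt_compat, Rdiv_lt_0_compat; auto.
  - right. field. lra.
Qed.

End KFactor.

(** * Divergence when [d < 2] *)

Lemma eventually_bounded_bounded (b : nat -> C) :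
  (exists N U, forall n, (N <= n)%nat -> Cmod (b n) <= U) ->
  exists B, forall n, Cmod (b n) <= B.
Proof.
  intros [N [U HU]]. exists (Rabs U + rsum (fun i => Cmod (b i)) N).
  assert (H0 := rsum_nonneg (fun i => Cmod (b i)) N (fun i => Cmod_ge_0 _)).
  assert (HU' := Rle_abs U). assert (0 <= Rabs U) by apply Rabs_pos.
  intros n. destruct (Nat.lt_ge_cases n N) as [Hn|Hn].
  - generalize (rsum_ge_term (fun i => Cmod (b i)) N n (fun i => Cmod_ge_0 _) Hn). lra.
  - specialize (HU n Hn). lra.
Qed.

Lemma abs_pow_small_le_1 x p : 1 <= p -> Rabs (abs_pow x p) < 1 -> Rabs x <= 1.
Proof.
  unfold abs_pow. intros Hp. destruct (Req_EM_T (Rabs x) 0) as [->|Hx]; [lra|].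
  rewrite Rabs_right by (left; apply Rpower_pos). intros H.
  destruct (Rle_or_lt (Rabs x) 1) as [|Hgt]; auto.
  generalize (Rpower_lt (Rabs x) 0 p Hgt ltac:(lra)). rewrite Rpower_O; lra.
Qed.

Lemma in_space_bounded X (b : nat -> C) :
  valid_space X -> in_space X b -> exists B, forall n, Cmod (b n) <= B.
Proof.
  intros HX Hb. apply eventually_bounded_bounded. destruct X; simpl in *.
  - apply ex_series_lim_0, is_lim_seq_spec in Hb.
    destruct (Hb (mkposreal 1 Rlt_0_1)) as [N HN]. exists N, 1. intros n Hn.
    specialize (HN n Hn). simpl in HN. rewrite Rminus_0_r in HN.
    generalize (abs_pow_small_le_1 _ _ HX HN). rewrite Rabs_right; [lra|].
    apply Rle_ge, Cmod_ge_0.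
  - destruct Hb as [M HM]. now exists O, M.
  - destruct (@filterlim_bounded C_AbsRing C_NormedModule b Hb) as [M HM]. now exists O, M.
  - destruct (@filterlim_bounded C_AbsRing C_NormedModule b) as [M HM];
      [now exists (RtoC 0) | now exists O, M].
Qed.

Definition half n := (S n / 2)%nat.

Lemma half_le n : (half n <= n)%nat.
Proof. unfold half. destruct n; [reflexivity|]. apply Nat.Div0.div_le_upper_bound. lia. Qed.

Lemma Rpower_gt_1 x e : e < 0 -> 0 < x < 1 -> 1 < Rpower x e.
Proof.
  intros He Hx. unfold Rpower. rewrite <- exp_0. apply exp_increasing.
  enough (ln x < 0) by nra. rewrite <- ln_1. apply ln_increasing; lra.
Qed.

Lemma odds_mul_le x u r : 0 < x < 1 -> 1 <= u -> x ^ 2 * u <= r < 1 ->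
  x ^ 2 / (1 - x ^ 2) * u <= r / (1 - r).
Proof.
  intros Hx Hu Hr. assert (0 < x ^ 2 < 1) by (split; nra). assert (x ^ 2 <= r) by nra.
  apply Rmult_le_reg_r with ((1 - x ^ 2) * (1 - r)); [nra|].
  replace (x ^ 2 / (1 - x ^ 2) * u * ((1 - x ^ 2) * (1 - r))) with (x ^ 2 * u * (1 - r))
    by (field; lra).
  replace (r / (1 - r) * ((1 - x ^ 2) * (1 - r))) with (r * (1 - x ^ 2)) by (field; lra).
  nra.
Qed.

Lemma le_odds r : 0 <= r < 1 -> r <= r / (1 - r).
Proof.
  intros Hr. apply (Rmult_le_reg_r (1 - r)); [lra|].
  replace (r / (1 - r) * (1 - r)) with r by (field; lra). nra.
Qed.

Lemma unbounded_Rpower_mul_exp (C D kap K : R) (N : nat) : 0 < C -> 0 < kap ->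
  exists y, (N <= y)%nat /\ K < C * Rpower (INR (S y)) D * exp (kap * INR (S y)).
Proof.
  intros HC Hk.
  (* with [S y = t^2], [ln (S y) <= 2 (t - 1)] grows linearly in [t], [kap * S y] quadratically *)
  set (Z := Rabs (ln (Rabs K + 1) - ln C)).
  destruct (INR_unbounded ((2 * Rabs D + Z + 1) / kap + INR N + 1)) as [t Ht].
  assert (HN := pos_INR N). assert (HZ : 0 <= Z) by apply Rabs_pos. assert (HD := Rabs_pos D).
  assert (Ht1 : 0 <= (2 * Rabs D + Z + 1) / kap) by (apply Rdiv_le_0_compat; lra).
  assert (Htk : 2 * Rabs D + Z + 1 < INR t * kap).
  { replace (2 * Rabs D + Z + 1) with ((2 * Rabs D + Z + 1) / kap * kap) by (field; lra).
    apply Rmult_lt_compat_r; lra. }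
  assert (Hn : (N < t)%nat) by (apply INR_lt; lra).
  exists (t * t - 1)%nat. split; [nia|].
  replace (S (t * t - 1)) with (t * t)%nat by nia. rewrite mult_INR.
  assert (Hl := ln_le_sub_1 (INR t) ltac:(lra)).
  assert (Hl0 : 0 <= ln (INR t)) by (apply ln_nonneg; lra).
  assert (Hlog : ln (Rabs K + 1) < ln C + D * ln (INR t * INR t) + kap * (INR t * INR t)).
  { rewrite ln_mult by lra. assert (Hz := Rle_abs (ln (Rabs K + 1) - ln C)).
    assert (- Rabs D * (ln (INR t) + ln (INR t)) <= D * (ln (INR t) + ln (INR t))).
    { apply Rmult_le_compat_r; [lra|]. unfold Rabs; destruct (Rcase_abs D); lra. }
    assert (kap * (INR t * INR t) >= (2 * Rabs D + Z + 1) * INR t) by nra.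
    assert (Rabs D * (ln (INR t) + ln (INR t)) <= Rabs D * (2 * (INR t - 1))) by nra.
    assert ((Z + 1) * INR t >= Z + 1) by nra.
    fold Z in Hz. lra. }
  assert (Htt : 0 < INR t * INR t) by nra.
  rewrite <- (ln_exp (kap * _)), <- ln_Rpower, <- !ln_mult in Hlog
    by first [ assumption | apply Rpower_pos | apply exp_pos
             | apply Rmult_lt_0_compat; [assumption | apply Rpower_pos] ].
  apply ln_lt_inv in Hlog; [| generalize (Rabs_pos K); lra |].
  - generalize (Rle_abs K). lra.
  - apply Rmult_lt_0_compat; [apply Rmult_lt_0_compat; [|apply Rpower_pos] | apply exp_pos]; auto.
Qed.

Lemma ratio_pow_seq a d i j : 0 < a i -> 0 < a j ->
  a j / a i = pow_seq d a j / pow_seq d a i * Rpower (INR (S i) / INR (S j)) d.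
Proof.
  intros Hi Hj. unfold pow_seq.
  assert (0 < INR (S i)) by (apply lt_0_INR; lia). assert (0 < INR (S j)) by (apply lt_0_INR; lia).
  rewrite Rpower_div by auto.
  assert (P1 := Rpower_pos (INR (S i)) d). assert (P2 := Rpower_pos (INR (S j)) d).
  field. lra.
Qed.

Section Divergence.
Variables (a : nat -> R) (d : R) (N0 : nat).
Hypothesis Ha : forall n, 0 < a n.
Hypothesis Hdec : forall n m, (n < m)%nat -> a m < a n.
Hypothesis Hd : d < 2.
Hypothesis Hinc : forall i j, (N0 <= i)%nat -> (i <= j)%nat -> pow_seq d a i <= pow_seq d a j.

Let Hinj := decreasing_injective a Hdec.

Definition theta := Rpower (/ 2) (d - 2).

Lemma theta_gt_1 : 1 < theta.
Proof. apply Rpower_gt_1; lra. Qed.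

Lemma ratio_ge i j : (N0 <= i)%nat -> (i <= j)%nat ->
  Rpower (INR (S i) / INR (S j)) d <= a j / a i.
Proof.
  intros H1 H2. rewrite (ratio_pow_seq a d i j) by auto.
  assert (Hi : 0 < pow_seq d a i) by (apply Rmult_lt_0_compat; [apply Rpower_pos | auto]).
  assert (1 <= pow_seq d a j / pow_seq d a i).
  { apply (Rmult_le_reg_r (pow_seq d a i)); auto. unfold Rdiv.
    rewrite Rmult_assoc, Rinv_l, Rmult_1_l, Rmult_1_r by lra. auto. }
  generalize (Rpower_pos (INR (S i) / INR (S j)) d). nra.
Qed.

(* For [m < (n+1)/2] the model factor is beaten by at least [theta = 2^(2-d) > 1]. *)
Definition lower_weight (n m : nat) : R :=
  if (m <? N0)%nat then a n / a 0 else if (m <? half n)%nat then theta else 1.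

Lemma inv_Rabs_1_sub_ratio_lt n m : (m < n)%nat ->
  / Rabs (1 - a m / a n) = (a n / a m) / (1 - a n / a m) /\ 0 < a n / a m < 1.
Proof.
  intros Hlt. assert (Hmn := Hdec _ _ Hlt). assert (Hn := Ha n). assert (Hm := Ha m).
  assert (a n / a m < 1)
    by (apply (Rmult_lt_reg_r (a m)); auto; unfold Rdiv; rewrite Rmult_assoc, Rinv_l; lra).
  assert (1 < a m / a n)
    by (apply (Rmult_lt_reg_r (a n)); auto; unfold Rdiv; rewrite Rmult_assoc, Rinv_l; lra).
  split; [|split; [apply Rdiv_lt_0_compat|]; auto].
  rewrite Rabs_left by lra. field. split; lra.
Qed.

Lemma qfactor_weight_le_head n m : (N0 <= n)%nat -> (2 * N0 <= S n)%nat -> (m < N0)%nat ->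
  qfactor n m * lower_weight n m <= / Rabs (1 - a m / a n).
Proof.
  intros Hn HN Hm. assert (Hlt : (m < n)%nat) by lia.
  destruct (inv_Rabs_1_sub_ratio_lt n m Hlt) as [-> Hr].
  unfold lower_weight. destruct (Nat.ltb_spec m N0); [|lia].
  rewrite qfactor_lt by auto. set (x := INR (S m) / INR (S n)).
  assert (Hx := ratio_S_lt_1 m n Hlt). fold x in Hx.
  assert (Hx2 : x ^ 2 <= 1 / 2).
  { assert (2 * INR (S m) ^ 2 <= INR (S n) ^ 2).
    { assert (INR (S m) <= INR N0) by (apply le_INR; lia).
      assert (2 * INR N0 <= INR (S n))
        by (replace 2 with (INR 2) by (simpl; ring); rewrite <- mult_INR; apply le_INR; lia).
      assert (0 <= INR (S m)) by apply pos_INR. nra. }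
    assert (0 < INR (S n)) by (apply lt_0_INR; lia).
    unfold x, Rdiv. rewrite Rpow_mult_distr, pow_inv.
    apply (Rmult_le_reg_r (INR (S n) ^ 2)); [nra|]. rewrite Rmult_assoc, Rinv_l by nra. lra. }
  assert (Hq : x ^ 2 / (1 - x ^ 2) <= 1).
  { apply (Rmult_le_reg_r (1 - x ^ 2)); [lra|]. unfold Rdiv. rewrite Rmult_assoc, Rinv_l; lra. }
  assert (a n / a 0 <= a n / a m).
  { apply Rmult_le_compat_l; [left; apply Ha|]. apply Rinv_le_contravar; auto.
    destruct m; [lra | left; apply Hdec; lia]. }
  assert (a n / a m <= a n / a m / (1 - a n / a m)) by (apply le_odds; lra).
  assert (0 <= a n / a 0) by (apply Rdiv_le_0_compat; [left|]; apply Ha).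
  assert (0 <= x ^ 2 / (1 - x ^ 2)) by (apply Rdiv_le_0_compat; nra).
  nra.
Qed.

Lemma qfactor_weight_le_mid n m : (N0 <= m)%nat -> (m < n)%nat ->
  qfactor n m * lower_weight n m <= / Rabs (1 - a m / a n).
Proof.
  intros Hm Hlt. destruct (inv_Rabs_1_sub_ratio_lt n m Hlt) as [-> Hr].
  rewrite qfactor_lt by auto. set (x := INR (S m) / INR (S n)).
  assert (Hx := ratio_S_lt_1 m n Hlt). fold x in Hx.
  assert (Hth := theta_gt_1).
  assert (Hw : 1 <= lower_weight n m <= Rpower x (d - 2)).
  { unfold lower_weight. destruct (Nat.ltb_spec m N0); [lia|].
    destruct (Nat.ltb_spec m (half n)) as [Hs|Hs].
    - split; [lra|]. apply Rle_Rpower_l_neg; [lra|]. split; [lra|].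
      assert (2 * INR (S m) <= INR (S n)).
      { replace 2 with (INR 2) by (simpl; ring). rewrite <- mult_INR.
        apply le_INR. generalize (Nat.Div0.mul_div_le (S n) 2). unfold half in Hs. lia. }
      apply (Rmult_le_reg_r (INR (S n))); [apply lt_0_INR; lia|].
      unfold x, Rdiv. rewrite Rmult_assoc, Rinv_l by (apply not_0_INR; lia). lra.
    - split; [lra|]. apply Rpower_ge_1; lra. }
  apply odds_mul_le; [auto | lra | split; [|lra]].
  assert (0 < x ^ 2) by nra.
  apply Rle_trans with (x ^ 2 * Rpower x (d - 2)); [apply Rmult_le_compat_l; lra|].
  rewrite <- Rpower_sq_mul by lra. unfold x. apply ratio_ge; lia.
Qed.

Lemma qfactor_weight_le_tail n m : (N0 <= n)%nat -> (n < m)%nat ->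
  qfactor n m * lower_weight n m <= / Rabs (1 - a m / a n).
Proof.
  intros Hn Hgt. assert (Hamn := Hdec _ _ Hgt). assert (Han := Ha n). assert (Ham := Ha m).
  unfold lower_weight. destruct (Nat.ltb_spec m N0); [lia|].
  destruct (Nat.ltb_spec m (half n)) as [Hs|_]; [generalize (half_le n); lia|].
  rewrite Rmult_1_r, qfactor_gt by auto. set (z := INR (S n) / INR (S m)).
  assert (Hz := ratio_S_lt_1 n m Hgt). fold z in Hz.
  assert (Hr : z ^ 2 <= a m / a n).
  { eapply Rle_trans; [|apply ratio_ge; lia]. fold z. rewrite (Rpower_sq_mul z d) by lra.
    assert (1 <= Rpower z (d - 2)) by (apply Rpower_ge_1; lra). nra. }
  assert (Hr1 : a m / a n < 1)
    by (apply (Rmult_lt_reg_r (a n)); auto; unfold Rdiv; rewrite Rmult_assoc, Rinv_l; lra).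
  rewrite Rabs_right by lra. unfold Rdiv. rewrite Rmult_1_l.
  apply Rinv_le_contravar; nra.
Qed.

Lemma qfactor_weight_le_kfactor (lam : nat -> C) n m :
  (N0 <= n)%nat -> (2 * N0 <= S n)%nat -> Re (lam m) <= 0 ->
  qfactor n m * lower_weight n m <= Cmod (kfactor a lam n m).
Proof.
  intros Hn HN Hre. destruct (Nat.eq_dec m n) as [->|Hmn].
  - rewrite kfactor_diag, Cmod_1. unfold qfactor, lower_weight.
    destruct (Nat.eq_dec n n); [|lia]. destruct (Nat.ltb_spec n N0); [lia|].
    destruct (Nat.ltb_spec n (half n)); [generalize (half_le n); lia|].
    lra.
  - eapply Rle_trans; [|now apply (Cmod_kfactor_ge a lam Ha Hinj)].
    destruct (Nat.lt_ge_cases m N0); [now apply qfactor_weight_le_head|].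
    destruct (Nat.lt_gt_cases m n) as [[Hlt|Hgt] _]; auto.
    + now apply qfactor_weight_le_mid.
    + now apply qfactor_weight_le_tail.
Qed.

Lemma Cmod_cprod_kfactor_ge (lam : nat -> C) n M :
  (forall m, Re (lam m) <= 0) -> (N0 <= n)%nat -> (2 * N0 <= S n)%nat ->
  (n + 1 + n * (n + 2) <= M)%nat ->
  2 / 3 * (a n / a 0) ^ N0 * theta ^ (half n - N0) <= Cmod (cprod (kfactor a lam n) M).
Proof.
  intros Hre Hn HN HM. set (M0 := (n + 1 + n * (n + 2))%nat).
  assert (Hth := theta_gt_1). assert (Hal : 0 < a n / a 0) by (apply Rdiv_lt_0_compat; auto).
  assert (Hhalf : (N0 <= half n <= M0)%nat).
  { split; [apply Nat.div_le_lower_bound | generalize (half_le n); unfold half]; unfold M0; lia. }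
  rewrite Cmod_cprod. replace M with (M0 + (M - M0))%nat by lia. rewrite rprod_add.
  assert (Htail : 1 <= rprod (fun i => Cmod (kfactor a lam n (M0 + i))) (M - M0)).
  { apply rprod_ge_1. intros i _. apply (Cmod_kfactor_ge_1 a lam Ha Hinj); auto.
    apply Hdec. unfold M0; lia. }
  assert (Hhead : rprod (fun m => qfactor n m * lower_weight n m) M0
                  <= rprod (fun m => Cmod (kfactor a lam n m)) M0).
  { apply rprod_le. intros m _. split; [|now apply qfactor_weight_le_kfactor].
    apply Rmult_le_pos; [left; apply qfactor_pos|]. unfold lower_weight.
    destruct (m <? N0)%nat; [lra|]. destruct (m <? half n)%nat; lra. }
  unfold lower_weight in Hhead. rewrite rprod_mul, rprod_blocks in Hhead by lia.
  assert (HW := qprod_ge_2_3 n). fold M0 in HW.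
  assert (0 <= (a n / a 0) ^ N0 * theta ^ (half n - N0)) by (apply Rmult_le_pos; apply pow_le; lra).
  assert (0 <= rprod (fun m => Cmod (kfactor a lam n m)) M0)
    by (apply rprod_nonneg; intros; apply Cmod_ge_0).
  apply Rle_trans with (rprod (fun m => Cmod (kfactor a lam n m)) M0); [|nra].
  eapply Rle_trans; [|apply Hhead]. rewrite Rmult_assoc. apply Rmult_le_compat_r; lra.
Qed.

Lemma a_ge_Rpower n : (N0 <= n)%nat -> pow_seq d a N0 * Rpower (INR (S n)) (- d) <= a n.
Proof.
  intros Hn. generalize (Hinc N0 n (le_n _) Hn). unfold pow_seq at 2.
  rewrite Rpower_Ropp. assert (Hp := Rpower_pos (INR (S n)) d). intros H.
  apply (Rmult_le_reg_l (Rpower (INR (S n)) d)); auto.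
  replace (Rpower (INR (S n)) d * (pow_seq d a N0 * / Rpower (INR (S n)) d))
    with (pow_seq d a N0) by (field; lra).
  auto.
Qed.

Lemma Cmod_k_ge (b lam : nat -> C) B n v :
  (forall m, Re (lam m) <= 0) -> b n <> 0%C -> Cmod (b n) <= B -> k_is a b lam n v ->
  (N0 <= n)%nat -> (2 * N0 <= S n)%nat ->
  2 / 3 / (B * a 0 ^ N0) * a n ^ S N0 * theta ^ (half n - N0) <= Cmod v.
Proof.
  intros Hre Hb HB Hv Hn HN. destruct (Cmod_k_is a b lam n v Hb Hv) as [P [HP ->]].
  assert (Hbpos : 0 < Cmod (b n)) by (apply Cmod_gt_0, Hb).
  assert (Han := Ha n). assert (Ha0 := Ha 0%nat). assert (Hth := theta_gt_1).
  assert (HPge : 2 / 3 * (a n / a 0) ^ N0 * theta ^ (half n - N0) <= Cmod P).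
  { apply (cseq_lim_Cmod_ge _ _ _ HP). exists (n + 1 + n * (n + 2))%nat. intros M HM.
    now apply Cmod_cprod_kfactor_ge. }
  assert (Hpre : a n / B <= Cmod (RtoC (a n) - lam n) / Cmod (b n)).
  { unfold Rdiv. apply Rmult_le_compat; [lra | left; apply Rinv_0_lt_compat; lra | |].
    - now apply Cmod_RtoC_sub_ge.
    - apply Rinv_le_contravar; lra. }
  replace (2 / 3 / (B * a 0 ^ N0) * a n ^ S N0 * theta ^ (half n - N0))
    with (a n / B * (2 / 3 * (a n / a 0) ^ N0 * theta ^ (half n - N0)))
    by (simpl pow; unfold Rdiv; rewrite Rpow_mult_distr, pow_inv; field;
        split; [apply pow_nonzero|]; lra).
  apply Rmult_le_compat; auto.
  - apply Rdiv_le_0_compat; lra.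
  - apply Rmult_le_pos; [apply Rmult_le_pos; [lra | apply pow_le, Rdiv_le_0_compat]|]; try lra.
    apply pow_le; lra.
Qed.

Definition growth_exponent := - d * INR (S N0).
Definition growth_const B :=
  2 / 3 / (B * a 0 ^ N0) * pow_seq d a N0 ^ S N0 * Rpower 2 growth_exponent / theta ^ N0.

Lemma growth_const_pos B : 0 < B -> 0 < growth_const B.
Proof.
  intros HB. assert (Hth := theta_gt_1). assert (Ha0 := Ha 0%nat).
  assert (0 < pow_seq d a N0) by (apply Rmult_lt_0_compat; [apply Rpower_pos | apply Ha]).
  apply Rdiv_lt_0_compat; [|apply pow_lt; lra].
  apply Rmult_lt_0_compat; [apply Rmult_lt_0_compat; [|apply pow_lt] | apply Rpower_pos]; auto.
  apply Rdiv_lt_0_compat; [lra | apply Rmult_lt_0_compat; [|apply pow_lt]; lra].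
Qed.

Lemma Cmod_k_odd_ge (b lam : nat -> C) B y v :
  (forall m, Re (lam m) <= 0) -> b (2 * y + 1)%nat <> 0%C -> Cmod (b (2 * y + 1)%nat) <= B ->
  k_is a b lam (2 * y + 1) v -> (N0 <= y)%nat ->
  growth_const B * Rpower (INR (S y)) growth_exponent * exp (ln theta * INR (S y)) <= Cmod v.
Proof.
  intros Hre Hb HB Hv Hy. set (n := (2 * y + 1)%nat).
  assert (HB0 : 0 < B) by (eapply Rlt_le_trans; [apply Cmod_gt_0, Hb | apply HB]).
  assert (Hth := theta_gt_1). assert (Ha0 := Ha 0%nat).
  set (c0 := pow_seq d a N0). set (D := growth_exponent).
  assert (Hc0 : 0 < c0) by (apply Rmult_lt_0_compat; [apply Rpower_pos | apply Ha]).
  assert (Hkn := Cmod_k_ge b lam B n v Hre Hb HB Hv ltac:(unfold n; lia) ltac:(unfold n; lia)).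
  replace (half n) with (S y) in Hkn
    by (unfold half; replace (S n) with (S y * 2)%nat by (unfold n; lia);
        symmetry; apply Nat.div_mul; lia).
  assert (Hapow : c0 ^ S N0 * (Rpower 2 D * Rpower (INR (S y)) D) <= a n ^ S N0).
  { rewrite Rpower_mult_distr by (lra || apply lt_0_INR; lia).
    replace (2 * INR (S y)) with (INR (S n))
      by (replace (S n) with (2 * S y)%nat by (unfold n; lia); rewrite mult_INR; reflexivity).
    unfold D, growth_exponent. rewrite <- Rpower_mult, Rpower_pow by apply Rpower_pos.
    rewrite <- Rpow_mult_distr. apply pow_incr.
    split; [apply Rmult_le_pos; [lra | left; apply Rpower_pos]|].
    apply a_ge_Rpower. unfold n; lia. }
  assert (Htheta : theta ^ (S y - N0) = exp (ln theta * INR (S y)) / theta ^ N0).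
  { rewrite (Rmult_comm (ln theta)), <- exp_pow, exp_ln by lra.
    replace (S y) with ((S y - N0) + N0)%nat at 2 by lia. rewrite pow_add.
    field. apply pow_nonzero; lra. }
  eapply Rle_trans; [|apply Hkn]. rewrite Htheta.
  assert (0 < exp (ln theta * INR (S y)) / theta ^ N0)
    by (apply Rdiv_lt_0_compat; [apply exp_pos | apply pow_lt; lra]).
  assert (0 < 2 / 3 / (B * a 0 ^ N0))
    by (apply Rdiv_lt_0_compat; [lra | apply Rmult_lt_0_compat; [|apply pow_lt]; lra]).
  unfold growth_const. fold c0 D.
  replace (2 / 3 / (B * a 0 ^ N0) * c0 ^ S N0 * Rpower 2 D / theta ^ N0 * Rpower (INR (S y)) D
           * exp (ln theta * INR (S y)))
    with (2 / 3 / (B * a 0 ^ N0) * (c0 ^ S N0 * (Rpower 2 D * Rpower (INR (S y)) D))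
          * (exp (ln theta * INR (S y)) / theta ^ N0))
    by (field; repeat split; try apply pow_nonzero; lra).
  apply Rmult_le_compat_r; [lra|]. apply Rmult_le_compat_l; lra.
Qed.

Lemma k_not_bounded (b lam k : nat -> C) :
  (forall n, b n <> 0%C) -> (exists B, forall n, Cmod (b n) <= B) ->
  (forall m, Re (lam m) <= 0) -> (forall n, k_is a b lam n (k n)) -> ~ cbounded k.
Proof.
  intros Hb [B HB] Hre Hk [K HK].
  assert (HB0 : 0 < B) by (eapply Rlt_le_trans; [apply Cmod_gt_0, (Hb O) | apply HB]).
  destruct (unbounded_Rpower_mul_exp (growth_const B) growth_exponent (ln theta) K N0)
    as [y [Hy HKy]]; [now apply growth_const_pos | rewrite <- ln_1; apply ln_increasing;
                                                   generalize theta_gt_1; lra |].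
  generalize (HK (2 * y + 1)%nat) (Cmod_k_odd_ge b lam B y _ Hre (Hb _) (HB _) (Hk _) Hy). lra.
Qed.

End Divergence.

(** * Summability when [d > 2] *)

Lemma is_series_inv_S_telescope : is_series (fun k => / INR (S k) - / INR (S (S k))) 1.
Proof.
  assert (E : forall n, sum_n (fun k => / INR (S k) - / INR (S (S k))) n = 1 - / INR (S (S n))).
  { induction n; [rewrite sum_O; simpl; field | rewrite sum_Sn, IHn; unfold plus; simpl; ring]. }
  unfold is_series. apply (filterlim_ext (fun n => 1 - / INR (S (S n)))); [intros; now rewrite E|].
  change (is_lim_seq (fun n => 1 - / INR (S (S n))) 1).
  replace (Finite 1) with (Rbar_minus 1 0) by (simpl; f_equal; ring).
  apply is_lim_seq_minus'; [apply is_lim_seq_const|].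
  replace (Finite 0) with (Rbar_inv p_infty) by reflexivity.
  apply is_lim_seq_inv; [|discriminate].
  apply (is_lim_seq_ext (fun n => INR (n + 2))); [intros; f_equal; lia|].
  apply (is_lim_seq_incr_n INR 2 p_infty), is_lim_seq_INR.
Qed.

Lemma ex_series_inv_S_sq : ex_series (fun m => / INR (S m) ^ 2).
Proof.
  apply (@ex_series_le R_AbsRing R_CompleteNormedModule _
           (fun k => 2 * (/ INR (S k) - / INR (S (S k))))).
  - intros n. assert (0 < INR (S n)) by (apply lt_0_INR; lia). rewrite (S_INR (S n)).
    change (Rabs (/ INR (S n) ^ 2) <= 2 * (/ INR (S n) - / (INR (S n) + 1))).
    rewrite Rabs_right by (apply Rle_ge; left; apply Rinv_0_lt_compat; nra).
    apply (Rmult_le_reg_r (INR (S n) ^ 2 * (INR (S n) + 1))); [nra|].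
    replace (/ INR (S n) ^ 2 * (INR (S n) ^ 2 * (INR (S n) + 1))) with (INR (S n) + 1)
      by (field; lra).
    replace (2 * (/ INR (S n) - / (INR (S n) + 1)) * (INR (S n) ^ 2 * (INR (S n) + 1)))
      with (2 * INR (S n)) by (field; lra).
    assert (1 <= INR (S n)) by (apply (le_INR 1); lia). lra.
  - exists (2 * 1). apply (@is_series_scal_l R_AbsRing R_NormedModule), is_series_inv_S_telescope.
Qed.

Lemma rsum_inv_sq_le n N :
  rsum (fun i => / INR (n + 2 + i) ^ 2) N <= / INR (S n) - / INR (S n + N).
Proof.
  induction N as [|N IH]; [simpl; rewrite Nat.add_0_r; lra|].
  change (rsum (fun i => / INR (n + 2 + i) ^ 2) N + / INR (n + 2 + N) ^ 2
            <= / INR (S n) - / INR (S n + S N)).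
  eapply Rle_trans; [apply Rplus_le_compat_r, IH|].
  assert (0 < INR (S n + N)) by (apply lt_0_INR; lia).
  replace (INR (n + 2 + N)) with (INR (S n + N) + 1) by (rewrite <- S_INR; f_equal; lia).
  replace (INR (S n + S N)) with (INR (S n + N) + 1) by (rewrite <- S_INR; f_equal; lia).
  set (v := INR (S n + N)) in *.
  enough (/ (v + 1) ^ 2 <= / v - / (v + 1)) by lra.
  apply (Rmult_le_reg_r (v * (v + 1) ^ 2)); [apply Rmult_lt_0_compat; [lra | apply pow_lt; lra]|].
  replace (/ (v + 1) ^ 2 * (v * (v + 1) ^ 2)) with v by (field; lra).
  replace ((/ v - / (v + 1)) * (v * (v + 1) ^ 2)) with (v + 1) by (field; lra). lra.
Qed.

Lemma sq_mul_rsum_inv_sq_le n N :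
  INR (S n) ^ 2 * rsum (fun i => / INR (n + 2 + i) ^ 2) N <= INR (S n).
Proof.
  assert (Ht := rsum_inv_sq_le n N). assert (0 < INR (S n)) by (apply lt_0_INR; lia).
  assert (0 < / INR (S n + N)) by (apply Rinv_0_lt_compat, lt_0_INR; lia).
  apply Rle_trans with (INR (S n) ^ 2 * / INR (S n)); [apply Rmult_le_compat_l; [nra | lra]|].
  right. field. lra.
Qed.

Lemma ex_lim_cprod_kfactor (a : nat -> R) (lam : nat -> C) n c N :
  (forall k, 0 < a k) -> (forall k l, (k < l)%nat -> a l < a k) ->
  (forall m, (N <= m)%nat -> a m <= c / INR (S m) ^ 2) ->
  (forall m, (N <= m)%nat -> Cmod (lam m) <= a m) ->
  exists P, cseq_lim (cprod (kfactor a lam n)) P.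
Proof.
  intros Ha Hdec Hc Hlam. apply ex_lim_cprod.
  set (N' := Nat.max N (S n)).
  set (gap := a n - a (S n)). assert (Hgap : 0 < gap)
    by (unfold gap; assert (H := Hdec n (S n) (Nat.lt_succ_diag_r n)); lra).
  apply (ex_series_incr_n _ N').
  apply (@ex_series_le R_AbsRing R_CompleteNormedModule _
           (fun k => (2 * c / gap) * / INR (S (N' + k)) ^ 2)).
  - intros k. change (Rabs (Cmod (kfactor a lam n (N' + k) - 1))
                      <= 2 * c / gap * / INR (S (N' + k)) ^ 2).
    rewrite Rabs_right by (apply Rle_ge, Cmod_ge_0). set (m := (N' + k)%nat).
    assert (Hnm : (n < m)%nat) by (unfold m, N'; lia).
    assert (HNm : (N <= m)%nat) by (unfold m, N'; lia).
    eapply Rle_trans; [apply (Cmod_kfactor_sub_1_le a lam Ha (decreasing_injective a Hdec)); lia|].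
    assert (Hamn := Hdec _ _ Hnm). rewrite Rabs_right by lra.
    assert (Hgap_m : gap <= a n - a m)
      by (unfold gap; destruct (Nat.eq_dec m (S n)) as [->|]; [lra|];
          assert (H := Hdec (S n) m ltac:(lia)); lra).
    assert (Hl := Hlam m HNm). assert (Hcm := Hc m HNm). assert (Ham := Ha m).
    apply Rle_trans with (2 * a m / gap).
    + unfold Rdiv. apply Rmult_le_compat; [generalize (Cmod_ge_0 (lam m)); lra | |lra|].
      * left; apply Rinv_0_lt_compat; lra.
      * apply Rinv_le_contravar; lra.
    + unfold Rdiv in *. replace (2 * c * / gap * / INR (S m) ^ 2)
        with (2 * (c * / INR (S m) ^ 2) * / gap) by ring.
      apply Rmult_le_compat_r; [left; now apply Rinv_0_lt_compat | lra].
  - apply (@ex_series_scal_l R_AbsRing R_NormedModule).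
    apply (ex_series_incr_n (fun k => / INR (S k) ^ 2) N'), ex_series_inv_S_sq.
Qed.

Lemma div_bounds x y : y <> 0%nat -> (y * (x / y) <= x < y * (x / y) + y)%nat.
Proof.
  intros Hy. assert (H1 := Nat.div_mod x y Hy). assert (H2 := Nat.mod_upper_bound x y Hy). lia.
Qed.

Lemma odds_shift_mono r R e : 0 <= r <= R -> R < 1 -> 0 <= e ->
  (r + e) / (1 - r) <= (R + e) / (1 - R).
Proof.
  intros H1 H2 H3. apply (Rmult_le_reg_r ((1 - r) * (1 - R))); [nra|].
  replace ((r + e) / (1 - r) * ((1 - r) * (1 - R))) with ((r + e) * (1 - R)) by (field; lra).
  replace ((R + e) / (1 - R) * ((1 - r) * (1 - R))) with ((R + e) * (1 - r)) by (field; lra).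
  nra.
Qed.

Lemma rprod_sq_ratio p K : rprod (fun m => (p / INR (S m)) ^ 2) K = (p ^ K / factR K) ^ 2.
Proof.
  induction K as [|K IH]; [simpl; unfold factR; simpl; field|].
  change (rprod (fun m => (p / INR (S m)) ^ 2) K * (p / INR (S K)) ^ 2
          = (p ^ S K / factR (S K)) ^ 2).
  rewrite IH, factR_S. assert (H := factR_pos K). assert (0 < INR (S K)) by (apply lt_0_INR; lia).
  rewrite <- (tech_pow_Rmult p K). field. split; lra.
Qed.

Lemma pow_div_factR_le p c K : 0 <= c -> 0 <= p <= c * INR K ->
  p ^ K / factR K <= (c * exp 1) ^ K.
Proof.
  intros Hc Hp. assert (HF := factR_pos K). assert (HK := pos_INR K).
  apply (Rmult_le_reg_r (factR K)); auto.
  unfold Rdiv. rewrite Rmult_assoc, Rinv_l, Rmult_1_r by lra.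
  apply Rle_trans with ((c * INR K) ^ K); [apply pow_incr; lra|].
  rewrite !Rpow_mult_distr, exp_pow, Rmult_1_r, Rmult_assoc.
  apply Rmult_le_compat_l; [apply pow_le; lra | apply pow_le_exp_mul_factR].
Qed.

Section Decay.
Variables (a : nat -> R) (lam : nat -> C) (d : R) (N L : nat) (eps : R).
Hypothesis Ha : forall n, 0 < a n.
Hypothesis Hdec : forall n m, (n < m)%nat -> a m < a n.
Hypothesis Hd : 2 < d.
Hypothesis Hdecr : forall i j, (N <= i)%nat -> (i <= j)%nat -> pow_seq d a j <= pow_seq d a i.
Hypothesis Hlam : forall m, (N <= m)%nat -> Cmod (lam m) <= eps * a m.
Hypothesis Heps : 0 < eps.
Hypothesis HL : (4 <= L)%nat.
Hypothesis HL144 : 144 <= Rpower (INR L) (d - 2).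

Definition kappa := (d - 2) * ln 2.
Definition inv_L_pow := / Rpower (INR L) d.

Hypothesis Heps_L : eps <= inv_L_pow.
Hypothesis Heps_gap : eps * INR L ^ 2 <= exp (- kappa / 2) - exp (- kappa).
Hypothesis Heps_kappa : eps * INR L ^ 2 <= kappa / 16.

Let Hinj := decreasing_injective a Hdec.

Lemma kappa_pos : 0 < kappa.
Proof. apply Rmult_lt_0_compat; [lra|]. rewrite <- ln_1. apply ln_increasing; lra. Qed.

Lemma Rpower_half_d_2 : Rpower (/ 2) (d - 2) = exp (- kappa).
Proof. unfold Rpower, kappa. rewrite ln_Rinv by lra. f_equal; ring. Qed.

Lemma INR_L_ge_4 : 4 <= INR L.
Proof. replace 4 with (INR 4) by (simpl; ring). now apply le_INR. Qed.

Lemma inv_L_pow_small : 0 < inv_L_pow <= / (144 * INR L ^ 2).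
Proof.
  assert (HL4 := INR_L_ge_4). unfold inv_L_pow.
  split; [apply Rinv_0_lt_compat, Rpower_pos|]. apply Rinv_le_contravar; [nra|].
  rewrite Rpower_sq_mul by lra. nra.
Qed.

Lemma eps_le_1 : eps <= 1.
Proof.
  destruct inv_L_pow_small as [_ H]. assert (HL4 := INR_L_ge_4).
  assert (/ (144 * INR L ^ 2) <= 1) by (rewrite <- Rinv_1; apply Rinv_le_contravar; nra). lra.
Qed.

Lemma eps_le_kappa : eps <= kappa / 64.
Proof.
  assert (HL4 := INR_L_ge_4). assert (16 <= INR L ^ 2) by nra.
  assert (eps * 16 <= eps * INR L ^ 2) by (apply Rmult_le_compat_l; lra).
  generalize kappa_pos. lra.
Qed.

Lemma ratio_le i j : (N <= i)%nat -> (i <= j)%nat ->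
  a j / a i <= Rpower (INR (S i) / INR (S j)) d.
Proof.
  intros H1 H2. rewrite (ratio_pow_seq a d i j) by auto.
  assert (Hi : 0 < pow_seq d a i) by (apply Rmult_lt_0_compat; [apply Rpower_pos | auto]).
  assert (Hj : 0 < pow_seq d a j) by (apply Rmult_lt_0_compat; [apply Rpower_pos | auto]).
  assert (pow_seq d a j / pow_seq d a i <= 1).
  { apply (Rmult_le_reg_r (pow_seq d a i)); auto. unfold Rdiv.
    rewrite Rmult_assoc, Rinv_l, Rmult_1_l, Rmult_1_r by lra. auto. }
  assert (0 < pow_seq d a j / pow_seq d a i) by (apply Rdiv_lt_0_compat; auto).
  generalize (Rpower_pos (INR (S i) / INR (S j)) d). nra.
Qed.

Lemma a_le_inv_sq m : (N <= m)%nat -> a m <= pow_seq d a N / INR (S m) ^ 2.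
Proof.
  intros Hm. assert (H := Hdecr N m (le_n _) Hm). unfold pow_seq at 1 in H.
  assert (Hq : 0 < INR (S m)) by (apply lt_0_INR; lia). rewrite Rpower_sq_mul in H by lra.
  assert (1 <= Rpower (INR (S m)) (d - 2)).
  { rewrite <- (Rpower_1_l (d - 2)). apply Rle_Rpower_l; [lra|].
    split; [lra | apply (le_INR 1); lia]. }
  apply (Rmult_le_reg_r (INR (S m) ^ 2)); [nra|].
  unfold Rdiv. rewrite Rmult_assoc, Rinv_l, Rmult_1_r by nra.
  replace (a m * INR (S m) ^ 2) with (INR (S m) ^ 2 * 1 * a m) by ring.
  eapply Rle_trans; [|exact H]. apply Rmult_le_compat_r; [left; apply Ha|].
  apply Rmult_le_compat_l; [nra | lra].
Qed.

Lemma Cmod_kfactor_le_below n m : (N <= m)%nat -> (m < n)%nat ->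
  Cmod (kfactor a lam n m) <= (a n / a m + eps) / (1 - a n / a m).
Proof.
  intros Hm Hmn. assert (Hamn := Hdec _ _ Hmn). assert (Han := Ha n). assert (Ham := Ha m).
  eapply Rle_trans; [apply (Cmod_kfactor_le a lam Ha Hinj); lia|].
  rewrite Rabs_left by lra.
  replace ((a n + Cmod (lam m)) / - (a n - a m))
    with ((a n / a m + Cmod (lam m) / a m) / (1 - a n / a m)) by (field; lra).
  assert (a n / a m < 1)
    by (apply (Rmult_lt_reg_r (a m)); auto; unfold Rdiv; rewrite Rmult_assoc, Rinv_l; lra).
  apply Rmult_le_compat_r; [left; apply Rinv_0_lt_compat; lra|].
  enough (Cmod (lam m) / a m <= eps) by lra.
  apply (Rmult_le_reg_r (a m)); auto. unfold Rdiv.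
  rewrite Rmult_assoc, Rinv_l; [generalize (Hlam m Hm) |]; lra.
Qed.

Lemma Cmod_kfactor_le_above n m : (N <= m)%nat -> (n < m)%nat ->
  Cmod (kfactor a lam n m) <= (1 + eps * (a m / a n)) / (1 - a m / a n).
Proof.
  intros Hm Hnm. assert (Hamn := Hdec _ _ Hnm). assert (Han := Ha n). assert (Ham := Ha m).
  eapply Rle_trans; [apply (Cmod_kfactor_le a lam Ha Hinj); lia|].
  rewrite Rabs_right by lra.
  replace ((1 + eps * (a m / a n)) / (1 - a m / a n)) with ((a n + eps * a m) / (a n - a m))
    by (field; lra).
  apply Rmult_le_compat_r; [left; apply Rinv_0_lt_compat; lra|]. generalize (Hlam m Hm). lra.
Qed.

Definition head_len n := (S n / L)%nat.
Definition crude_bound m := (a 0 + Cmod (lam m)) / (a m - a (S m)).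
Definition head_bound m := if (m <? N)%nat then crude_bound m else 4 * inv_L_pow.
Definition log_weight n m :=
  if (m <? half n)%nat then - kappa / 2
  else if (m <? n)%nat then kappa / 16
  else if (m =? n)%nat then 0
  else eps * (INR (S n) / INR (S m)) ^ 2.
(* For [m < head_len n], [kfactor] is only bounded by [head_bound m]; writing this as
   [qfactor n m * upper_weight n m] costs [((n+1)^K / K!)^2] over the head, which the
   factors [4 inv_L_pow] absorb.  Elsewhere [kfactor] is at most [qfactor * exp log_weight]. *)
Definition upper_weight n m :=
  if (m <? head_len n)%nat then head_bound m * (INR (S n) / INR (S m)) ^ 2
  else exp (log_weight n m).

Lemma head_len_le_half n : (head_len n <= half n)%nat.
Proof.
  unfold head_len, half. apply Nat.div_le_lower_bound; [lia|].
  generalize (div_bounds (S n) L ltac:(lia)). nia.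
Qed.

Lemma head_len_le n : (head_len n <= n)%nat.
Proof. generalize (head_len_le_half n) (half_le n). lia. Qed.

Lemma ratio_le_inv_L n m : (m < head_len n)%nat -> INR (S m) / INR (S n) <= / INR L.
Proof.
  intros H. assert (HL4 := INR_L_ge_4). assert (0 < INR (S n)) by (apply lt_0_INR; lia).
  assert (INR L * INR (S m) <= INR (S n)).
  { rewrite <- mult_INR. apply le_INR. generalize (div_bounds (S n) L ltac:(lia)).
    unfold head_len in H. nia. }
  apply (Rmult_le_reg_r (INR (S n) * INR L)); [nra|]. unfold Rdiv.
  replace (INR (S m) * / INR (S n) * (INR (S n) * INR L)) with (INR L * INR (S m)) by (field; lra).
  replace (/ INR L * (INR (S n) * INR L)) with (INR (S n)) by (field; lra). lra.
Qed.

Lemma inv_L_le_ratio n m : (head_len n <= m)%nat -> / INR L <= INR (S m) / INR (S n).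
Proof.
  intros H. assert (HL4 := INR_L_ge_4). assert (0 < INR (S n)) by (apply lt_0_INR; lia).
  assert (INR (S n) <= INR L * INR (S m)).
  { rewrite <- mult_INR. apply le_INR. generalize (div_bounds (S n) L ltac:(lia)).
    unfold head_len in H. nia. }
  apply (Rmult_le_reg_r (INR (S n) * INR L)); [nra|]. unfold Rdiv.
  replace (INR (S m) * / INR (S n) * (INR (S n) * INR L)) with (INR L * INR (S m)) by (field; lra).
  replace (/ INR L * (INR (S n) * INR L)) with (INR (S n)) by (field; lra). lra.
Qed.

Lemma crude_bound_pos m : 0 < crude_bound m.
Proof.
  unfold crude_bound. generalize (Cmod_ge_0 (lam m)) (Ha 0) (Hdec m (S m) ltac:(lia)).
  intros. apply Rdiv_lt_0_compat; lra.
Qed.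

Lemma head_bound_pos m : 0 < head_bound m.
Proof.
  unfold head_bound. destruct (m <? N)%nat; [apply crude_bound_pos|].
  generalize inv_L_pow_small. lra.
Qed.

Lemma Cmod_kfactor_le_head n m : (m < head_len n)%nat ->
  Cmod (kfactor a lam n m) <= head_bound m.
Proof.
  intros HmK. assert (Hmn : (m < n)%nat) by (generalize (head_len_le n); lia).
  assert (Hamn := Hdec _ _ Hmn). assert (Han := Ha n). assert (Ham := Ha m).
  unfold head_bound. destruct (Nat.ltb_spec m N) as [HmN|HmN].
  - eapply Rle_trans; [apply (Cmod_kfactor_le a lam Ha Hinj); lia|].
    rewrite Rabs_left by lra. unfold crude_bound.
    assert (a n <= a (S m))
      by (destruct (Nat.eq_dec (S m) n) as [->|]; [lra | left; apply Hdec; lia]).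
    assert (a n <= a 0) by (destruct n; [lra | left; apply Hdec; lia]).
    assert (a (S m) < a m) by (apply Hdec; lia). assert (0 <= Cmod (lam m)) by apply Cmod_ge_0.
    unfold Rdiv. apply Rmult_le_compat; [lra | left; apply Rinv_0_lt_compat; lra | lra |].
    apply Rinv_le_contravar; lra.
  - eapply Rle_trans; [apply Cmod_kfactor_le_below; lia|].
    assert (HdL := inv_L_pow_small). assert (HL4 := INR_L_ge_4).
    assert (Hrho : a n / a m <= inv_L_pow).
    { eapply Rle_trans; [apply ratio_le; lia|]. unfold inv_L_pow. rewrite <- Rpower_inv_l by lra.
      apply Rle_Rpower_l; [lra|]. split; [apply Rdiv_lt_0_compat; apply lt_0_INR; lia|].
      now apply ratio_le_inv_L. }
    assert (0 < a n / a m) by (apply Rdiv_lt_0_compat; auto).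
    assert (/ (144 * INR L ^ 2) <= / 144)
      by (apply Rinv_le_contravar; [lra|]; assert (1 <= INR L ^ 2) by nra; lra).
    eapply Rle_trans; [apply odds_shift_mono with (R := inv_L_pow); lra|].
    apply (Rmult_le_reg_r (1 - inv_L_pow)); [lra|].
    unfold Rdiv. rewrite Rmult_assoc, Rinv_l by lra. nra.
Qed.

Lemma eps_div_ratio_sq_le n m : (head_len n <= m)%nat ->
  eps / (INR (S m) / INR (S n)) ^ 2 <= eps * INR L ^ 2.
Proof.
  intros Hm. assert (Hxl := inv_L_le_ratio n m Hm). assert (HL4 := INR_L_ge_4).
  set (x := INR (S m) / INR (S n)) in *.
  assert (1 <= INR L * x)
    by (apply (Rmult_le_compat_l (INR L)) in Hxl; [rewrite Rinv_r in Hxl|]; lra).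
  assert (0 < x) by (apply Rlt_le_trans with (/ INR L); [apply Rinv_0_lt_compat|]; lra).
  apply (Rmult_le_reg_r (x ^ 2)); [nra|]. unfold Rdiv. rewrite Rmult_assoc, Rinv_l by nra.
  assert (1 <= (INR L * x) ^ 2) by nra. rewrite Rpow_mult_distr in *. nra.
Qed.

Lemma Rpower_ratio_add_le_exp_log_weight n m : (head_len n <= m)%nat -> (m < n)%nat ->
  Rpower (INR (S m) / INR (S n)) (d - 2) + eps * INR L ^ 2 <= exp (log_weight n m).
Proof.
  intros HKm Hmn. assert (Hx := ratio_S_lt_1 m n Hmn). unfold log_weight.
  destruct (Nat.ltb_spec m (half n)) as [Hs|Hs].
  - enough (Rpower (INR (S m) / INR (S n)) (d - 2) <= exp (- kappa)) by lra.
    rewrite <- Rpower_half_d_2. apply Rle_Rpower_l; [lra|]. split; [lra|].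
    assert (2 * INR (S m) <= INR (S n)).
    { replace 2 with (INR 2) by (simpl; ring). rewrite <- mult_INR. apply le_INR.
      generalize (div_bounds (S n) 2 ltac:(lia)). unfold half in Hs. lia. }
    assert (0 < INR (S n)) by (apply lt_0_INR; lia).
    apply (Rmult_le_reg_r (INR (S n))); auto. unfold Rdiv. rewrite Rmult_assoc, Rinv_l by lra. lra.
  - destruct (Nat.ltb_spec m n); [|lia].
    assert (Rpower (INR (S m) / INR (S n)) (d - 2) <= 1) by (apply Rpower_le_1; lra).
    generalize (exp_ineq1_le (kappa / 16)). lra.
Qed.

Lemma Cmod_kfactor_le_mid n m : (N <= head_len n)%nat -> (head_len n <= m)%nat -> (m < n)%nat ->
  Cmod (kfactor a lam n m) <= qfactor n m * exp (log_weight n m).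
Proof.
  intros HNK HKm Hmn. assert (Han := Ha n). assert (Ham := Ha m).
  eapply Rle_trans; [apply Cmod_kfactor_le_below; lia|].
  assert (Hg := Rpower_ratio_add_le_exp_log_weight n m HKm Hmn).
  assert (Hex := eps_div_ratio_sq_le n m HKm).
  set (x := INR (S m) / INR (S n)) in *. assert (Hx := ratio_S_lt_1 m n Hmn). fold x in Hx.
  set (rho := a n / a m). set (u := Rpower x (d - 2)) in *.
  assert (Hu : 0 < u <= 1) by (split; [apply Rpower_pos | apply Rpower_le_1; lra]).
  assert (Hrho : rho <= x ^ 2 * u)
    by (unfold u; rewrite <- Rpower_sq_mul by lra; apply ratio_le; lia).
  assert (Hrho0 : 0 < rho) by (apply Rdiv_lt_0_compat; auto).
  assert (Hx2 : 0 < x ^ 2 < 1) by (split; nra).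
  (* [rho <= x^2 u] turns the factor into [qfactor n m * (u + eps / x^2)] *)
  apply Rle_trans with ((x ^ 2 * u + eps) / (1 - x ^ 2)).
  { apply Rle_trans with ((x ^ 2 * u + eps) / (1 - x ^ 2 * u)); [apply odds_shift_mono; nra|].
    apply Rmult_le_compat_l; [nra|]. apply Rinv_le_contravar; nra. }
  rewrite qfactor_lt by auto. fold x.
  replace ((x ^ 2 * u + eps) / (1 - x ^ 2)) with (x ^ 2 / (1 - x ^ 2) * (u + eps / x ^ 2))
    by (field; lra).
  apply Rmult_le_compat_l; [apply Rdiv_le_0_compat|]; lra.
Qed.

Lemma Cmod_kfactor_le_tail n m : (N <= n)%nat -> (n < m)%nat ->
  Cmod (kfactor a lam n m) <= qfactor n m * exp (log_weight n m).
Proof.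
  intros HNn Hnm. assert (Hamn := Hdec _ _ Hnm). assert (Han := Ha n). assert (Ham := Ha m).
  eapply Rle_trans; [apply Cmod_kfactor_le_above; lia|].
  unfold log_weight. destruct (Nat.ltb_spec m (half n)); [generalize (half_le n); lia|].
  destruct (Nat.ltb_spec m n); [lia|]. destruct (Nat.eqb_spec m n); [lia|].
  rewrite qfactor_gt by auto. set (z := INR (S n) / INR (S m)).
  assert (Hz := ratio_S_lt_1 n m Hnm). fold z in Hz. set (r := a m / a n).
  assert (Hr : r <= z ^ 2).
  { unfold r. eapply Rle_trans; [apply ratio_le; lia|]. fold z. rewrite (Rpower_sq_mul z d) by lra.
    assert (Rpower z (d - 2) <= 1) by (apply Rpower_le_1; lra). nra. }
  assert (Hr0 : 0 < r) by (apply Rdiv_lt_0_compat; auto).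
  assert (Hz2 : 0 < z ^ 2 < 1) by (split; nra).
  apply Rle_trans with ((1 + eps * z ^ 2) / (1 - z ^ 2)).
  - apply (Rmult_le_reg_r ((1 - r) * (1 - z ^ 2))); [apply Rmult_lt_0_compat; lra|].
    replace ((1 + eps * r) / (1 - r) * ((1 - r) * (1 - z ^ 2))) with ((1 + eps * r) * (1 - z ^ 2))
      by (field; nra).
    replace ((1 + eps * z ^ 2) / (1 - z ^ 2) * ((1 - r) * (1 - z ^ 2)))
      with ((1 + eps * z ^ 2) * (1 - r)) by (field; nra).
    nra.
  - replace ((1 + eps * z ^ 2) / (1 - z ^ 2)) with (1 / (1 - z ^ 2) * (1 + eps * z ^ 2))
      by (field; nra).
    apply Rmult_le_compat_l; [apply Rdiv_le_0_compat; nra | apply exp_ineq1_le].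
Qed.

Lemma Cmod_kfactor_le_weight n m : (N <= head_len n)%nat ->
  Cmod (kfactor a lam n m) <= qfactor n m * upper_weight n m.
Proof.
  intros HNK. assert (HKn := head_len_le n).
  unfold upper_weight. destruct (Nat.ltb_spec m (head_len n)) as [HmK|HmK].
  - assert (Hmn : (m < n)%nat) by lia.
    eapply Rle_trans; [apply Cmod_kfactor_le_head, HmK|].
    assert (Hx := ratio_S_lt_1 m n Hmn). assert (Hh := qfactor_ge_sq n m Hmn).
    assert (Hb := head_bound_pos m).
    assert (0 < INR (S m)) by (apply lt_0_INR; lia).
    assert (0 < INR (S n)) by (apply lt_0_INR; lia).
    replace (INR (S n) / INR (S m)) with (/ (INR (S m) / INR (S n))) by (field; split; lra).
    set (x := INR (S m) / INR (S n)) in *.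
    apply Rle_trans with (x ^ 2 * (head_bound m * (/ x) ^ 2));
      [right; field; lra|].
    apply Rmult_le_compat_r; [apply Rmult_le_pos; [lra | apply pow2_ge_0] | auto].
  - destruct (Nat.lt_total m n) as [Hlt | [-> | Hgt]].
    + now apply Cmod_kfactor_le_mid.
    + rewrite kfactor_diag, Cmod_1. unfold qfactor, log_weight.
      destruct (Nat.eq_dec n n); [|lia].
      destruct (Nat.ltb_spec n (half n)); [generalize (half_le n); lia|].
      rewrite Nat.ltb_irrefl, Nat.eqb_refl, exp_0. lra.
    + apply Cmod_kfactor_le_tail; lia.
Qed.

Definition head_const := rprod crude_bound N * (4 * INR L ^ 2 * exp 1 ^ 2) ^ N.

Lemma rprod_head_bound K : (N <= K)%nat ->
  rprod head_bound K = rprod crude_bound N * (4 * inv_L_pow) ^ (K - N).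
Proof.
  intros HK. replace K with (N + (K - N))%nat at 1 by lia. rewrite rprod_add, <- rprod_const.
  f_equal; apply rprod_ext; intros i Hi; unfold head_bound.
  - now destruct (Nat.ltb_spec i N); [|lia].
  - now destruct (Nat.ltb_spec (N + i) N); [lia|].
Qed.

Lemma rprod_upper_weight_head n : (N <= head_len n)%nat -> (1 <= head_len n)%nat ->
  rprod (upper_weight n) (head_len n) <= head_const.
Proof.
  intros HNK HK1. set (K := head_len n). set (p := INR (S n)).
  assert (Hp : 0 < p) by (apply lt_0_INR; lia). assert (HL4 := INR_L_ge_4).
  rewrite (rprod_ext _ (fun m => head_bound m * (p / INR (S m)) ^ 2)).
  2:{ intros m Hm. unfold upper_weight. fold K. now destruct (Nat.ltb_spec m K); [|lia]. }
  rewrite rprod_mul, rprod_sq_ratio, rprod_head_bound by auto.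
  set (Q := 4 * INR L ^ 2 * exp 1 ^ 2).
  assert (He := exp_le_3). assert (He0 := exp_pos 1).
  assert (HQ0 : 0 < Q) by (unfold Q; apply Rmult_lt_0_compat; [|apply pow_lt]; nra).
  assert (HQ : 4 * inv_L_pow * Q <= 1).
  { destruct inv_L_pow_small as [H0 H1]. unfold Q.
    apply Rle_trans with (4 * / (144 * INR L ^ 2) * (4 * INR L ^ 2 * exp 1 ^ 2)).
    - apply Rmult_le_compat_r; [nra | lra].
    - replace (4 * / (144 * INR L ^ 2) * (4 * INR L ^ 2 * exp 1 ^ 2)) with (exp 1 ^ 2 / 9)
        by (field; nra). assert (exp 1 ^ 2 <= 9) by nra. lra. }
  assert (Hfact : (p ^ K / factR K) ^ 2 <= Q ^ K).
  { unfold Q. replace (4 * INR L ^ 2 * exp 1 ^ 2) with ((2 * INR L * exp 1) ^ 2) by ring.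
    rewrite <- pow_mult, Nat.mul_comm, pow_mult. apply pow_incr.
    split; [apply Rdiv_le_0_compat; [apply pow_le; lra | apply factR_pos]|].
    apply pow_div_factR_le; [lra|]. split; [lra|].
    generalize (div_bounds (S n) L ltac:(lia)). fold (head_len n) K. intros HK.
    replace (2 * INR L * INR K) with (INR (2 * L * K)) by (rewrite !mult_INR; simpl; ring).
    apply le_INR. nia. }
  unfold head_const. fold Q.
  assert (HC := rprod_pos crude_bound N (fun m _ => crude_bound_pos m)).
  assert (HdL := inv_L_pow_small).
  assert (Hpow : (4 * inv_L_pow * Q) ^ (K - N) <= 1)
    by (rewrite <- (pow1 (K - N)); apply pow_incr; split; [apply Rmult_le_pos|]; lra).
  apply Rle_trans with (rprod crude_bound N * (4 * inv_L_pow) ^ (K - N) * Q ^ K).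
  - apply Rmult_le_compat_l; auto. apply Rmult_le_pos; [lra | apply pow_le; lra].
  - replace K with (N + (K - N))%nat at 2 by lia.
    rewrite pow_add, <- (Rmult_1_r (rprod crude_bound N * Q ^ N)).
    replace (rprod crude_bound N * (4 * inv_L_pow) ^ (K - N) * (Q ^ N * Q ^ (K - N)))
      with (rprod crude_bound N * Q ^ N * (4 * inv_L_pow * Q) ^ (K - N))
      by (rewrite Rpow_mult_distr; ring).
    apply Rmult_le_compat_l; auto. apply Rmult_le_pos; [lra | apply pow_le; lra].
Qed.

Lemma rsum_log_weight_le n M : (S n <= M)%nat ->
  rsum (fun i => log_weight n (head_len n + i)) (M - head_len n)
  <= kappa / 4 - 5 * kappa * INR (S n) / 64.
Proof.
  intros HM. set (K := head_len n). set (s := half n). set (p := INR (S n)).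
  assert (HKs : (K <= s)%nat) by apply head_len_le_half.
  assert (Hsn : (s <= n)%nat) by apply half_le.
  assert (HLK := div_bounds (S n) L ltac:(lia)). fold (head_len n) K in HLK.
  assert (Hs2 := div_bounds (S n) 2 ltac:(lia)). fold (half n) s in Hs2.
  assert (Hp : 0 < p) by (apply lt_0_INR; lia).
  assert (Hk := kappa_pos). assert (He := eps_le_kappa).
  replace (M - K)%nat with ((s - K) + ((n - s) + (1 + (M - S n))))%nat by lia.
  rewrite !rsum_add.
  rewrite (rsum_ext _ (fun _ => - kappa / 2) (s - K)).
  2:{ intros i Hi. unfold log_weight. fold s. now destruct (Nat.ltb_spec (K + i) s); [|lia]. }
  rewrite (rsum_ext _ (fun _ => kappa / 16) (n - s)).
  2:{ intros i Hi. unfold log_weight. fold s.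
      destruct (Nat.ltb_spec (K + (s - K + i)) s); [lia|].
      now destruct (Nat.ltb_spec (K + (s - K + i)) n); [|lia]. }
  rewrite (rsum_ext _ (fun i => eps * p ^ 2 * / INR (n + 2 + i) ^ 2) (M - S n)).
  2:{ intros i Hi. unfold log_weight. fold s.
      replace (K + (s - K + (n - s + (1 + i))))%nat with (S n + i)%nat by lia.
      destruct (Nat.ltb_spec (S n + i) s); [lia|]. destruct (Nat.ltb_spec (S n + i) n); [lia|].
      destruct (Nat.eqb_spec (S n + i) n); [lia|].
      replace (S (S n + i)) with (n + 2 + i)%nat by lia. fold p.
      assert (0 < INR (n + 2 + i)) by (apply lt_0_INR; lia). field. lra. }
  simpl (rsum _ 1). unfold log_weight at 1.
  replace (K + (s - K + (n - s + 0)))%nat with n by lia. fold s.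
  destruct (Nat.ltb_spec n s); [lia|]. rewrite Nat.ltb_irrefl, Nat.eqb_refl.
  rewrite !rsum_const, rsum_scal.
  assert (Htail : eps * p ^ 2 * rsum (fun i => / INR (n + 2 + i) ^ 2) (M - S n) <= eps * p)
    by (rewrite Rmult_assoc; apply Rmult_le_compat_l; [lra | apply sq_mul_rsum_inv_sq_le]).
  rewrite !minus_INR by lia.
  assert (Hsr : p <= 2 * INR s + 1)
    by (replace (2 * INR s + 1) with (INR (S (2 * s))) by (rewrite S_INR, mult_INR; simpl; ring);
        apply le_INR; lia).
  assert (HKr : 4 * INR K <= p).
  { assert (HLKr : INR (L * K) <= p) by (apply le_INR; lia). rewrite mult_INR in HLKr.
    assert (HL4 := INR_L_ge_4). assert (0 <= INR K) by apply pos_INR. nra. }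
  assert (Hnr : INR n = p - 1) by (unfold p; rewrite S_INR; ring).
  rewrite Hnr. nra.
Qed.

Lemma rprod_upper_weight_tail n M : (S n <= M)%nat ->
  rprod (fun i => upper_weight n (head_len n + i)) (M - head_len n)
  <= exp (kappa / 4 - 5 * kappa * INR (S n) / 64).
Proof.
  intros HM. rewrite (rprod_ext _ (fun i => exp (log_weight n (head_len n + i)))).
  - rewrite rprod_exp. apply exp_le_exp, rsum_log_weight_le, HM.
  - intros i _. unfold upper_weight.
    now destruct (Nat.ltb_spec (head_len n + i) (head_len n)); [lia|].
Qed.

Lemma Cmod_lim_cprod_kfactor_le n P :
  (N <= head_len n)%nat -> (1 <= head_len n)%nat -> cseq_lim (cprod (kfactor a lam n)) P ->
  Cmod P <= 2 * head_const * exp (kappa / 4 - 5 * kappa * INR (S n) / 64).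
Proof.
  intros HNK HK1 HP. apply (cseq_lim_Cmod_le _ _ _ HP). exists (S n). intros M HM.
  set (K := head_len n).
  assert (HKn := head_len_le n). fold K in HKn.
  rewrite Cmod_cprod. eapply Rle_trans.
  { apply (rprod_le _ (fun m => qfactor n m * upper_weight n m)). intros m _.
    split; [apply Cmod_ge_0 | now apply Cmod_kfactor_le_weight]. }
  assert (Hw : forall m, 0 <= upper_weight n m).
  { intros m. unfold upper_weight. destruct (m <? head_len n)%nat; [|left; apply exp_pos].
    apply Rmult_le_pos; [left; apply head_bound_pos | apply pow2_ge_0]. }
  rewrite rprod_mul. replace M with (K + (M - K))%nat at 2 by lia. rewrite rprod_add.
  assert (HW := qprod_le_2 n M ltac:(lia)).
  assert (HA := rprod_upper_weight_head n HNK HK1).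
  assert (HB := rprod_upper_weight_tail n M HM).
  assert (0 <= rprod (upper_weight n) K) by (apply rprod_nonneg; auto).
  assert (0 <= rprod (fun i => upper_weight n (K + i)) (M - K)) by (apply rprod_nonneg; auto).
  assert (0 <= rprod (qfactor n) M) by (apply rprod_nonneg; intros; left; apply qfactor_pos).
  rewrite Rmult_assoc. apply Rmult_le_compat; auto; [apply Rmult_le_pos; auto|].
  apply Rmult_le_compat; auto.
Qed.

Lemma ex_lim_cprod_kfactor_decay n : exists P, cseq_lim (cprod (kfactor a lam n)) P.
Proof.
  apply (ex_lim_cprod_kfactor a lam n (pow_seq d a N) N Ha Hdec a_le_inv_sq).
  intros m Hm. generalize (Hlam m Hm) (Ha m) eps_le_1. nra.
Qed.

Lemma Cmod_k_le (b : nat -> C) n v : b n <> 0%C -> (N + 1 <= head_len n)%nat ->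
  a n / Cmod (b n) <= exp (kappa / 64 * INR (S n)) -> k_is a b lam n v ->
  Cmod v <= 4 * head_const * exp (kappa / 4 - kappa / 16 * INR (S n)).
Proof.
  intros Hb HK Hab Hv. destruct (Cmod_k_is a b lam n v Hb Hv) as [P [HP ->]].
  assert (HPn := Cmod_lim_cprod_kfactor_le n P ltac:(lia) ltac:(lia) HP).
  assert (Han := Ha n). assert (Hbn : 0 < Cmod (b n)) by (apply Cmod_gt_0, Hb).
  assert (Hnum : Cmod (RtoC (a n) - lam n) <= 2 * a n).
  { unfold Cminus. eapply Rle_trans; [apply Cmod_triangle|].
    rewrite Cmod_opp, Cmod_R, Rabs_right by lra.
    assert (N <= n)%nat by (generalize (head_len_le n); lia).
    generalize (Hlam n ltac:(lia)) eps_le_1. nra. }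
  apply Rle_trans with (2 * (a n / Cmod (b n)) * Cmod P).
  { apply Rmult_le_compat_r; [apply Cmod_ge_0|]. unfold Rdiv. rewrite <- Rmult_assoc.
    apply Rmult_le_compat_r; [left; apply Rinv_0_lt_compat|]; lra. }
  apply Rle_trans with (2 * exp (kappa / 64 * INR (S n))
                        * (2 * head_const * exp (kappa / 4 - 5 * kappa * INR (S n) / 64))).
  { apply Rmult_le_compat; [| apply Cmod_ge_0 | |]; auto.
    - apply Rmult_le_pos; [lra | apply Rdiv_le_0_compat; lra].
    - lra. }
  right. replace (kappa / 4 - kappa / 16 * INR (S n))
    with (kappa / 64 * INR (S n) + (kappa / 4 - 5 * kappa * INR (S n) / 64)) by field.
  rewrite exp_plus. ring.
Qed.

Lemma ex_summable_k_of_bounds (b : nat -> C) : (forall n, b n <> 0%C) ->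
  (exists N', forall n, (N' <= n)%nat -> a n / Cmod (b n) <= exp (kappa / 64 * INR (S n))) ->
  exists k : nat -> C, (forall n, k_is a b lam n (k n)) /\ ex_series (fun n => Cmod (k n)).
Proof.
  intros Hb [N' HN']. assert (Hk := kappa_pos).
  destruct (functional_choice _ ex_lim_cprod_kfactor_decay) as [P HP].
  set (k := fun n => (- ((RtoC (a n) - lam n) / b n) * P n)%C).
  assert (Hk_is : forall n, k_is a b lam n (k n)) by (intros n; now exists (P n)).
  exists k. split; auto.
  set (q := exp (- kappa / 16)).
  assert (Hq : 0 < q < 1) by (split; [apply exp_pos | rewrite <- exp_0; apply exp_increasing; lra]).
  set (Ns := Nat.max N' (L * (N + 1))).
  apply (ex_series_incr_n _ Ns).
  apply (@ex_series_le R_AbsRing R_CompleteNormedModule _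
           (fun j => 4 * head_const * exp (kappa / 4) * q ^ S (Ns + j))).
  - intros j.
    change (Rabs (Cmod (k (Ns + j)%nat)) <= 4 * head_const * exp (kappa / 4) * q ^ S (Ns + j)).
    rewrite Rabs_right by (apply Rle_ge, Cmod_ge_0).
    eapply Rle_trans; [apply (Cmod_k_le b (Ns + j)); auto|].
    + unfold head_len. apply Nat.div_le_lower_bound; [lia|].
      generalize (Nat.le_max_r N' (L * (N + 1))). fold Ns. lia.
    + apply HN'. unfold Ns; lia.
    + right. unfold q. rewrite exp_pow, (Rmult_assoc (4 * head_const)), <- exp_plus.
      replace (kappa / 4 - kappa / 16 * INR (S (Ns + j)))
        with (kappa / 4 + INR (S (Ns + j)) * (- kappa / 16)) by field.
      reflexivity.
  - apply (@ex_series_scal_l R_AbsRing R_NormedModule).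
    apply (ex_series_incr_n (fun k => q ^ S k) Ns), (ex_series_incr_1 (fun k => q ^ k)).
    apply ex_series_geom. rewrite Rabs_right; lra.
Qed.

End Decay.

Lemma exists_L_Rpower_ge d : 2 < d -> exists L, (4 <= L)%nat /\ 144 <= Rpower (INR L) (d - 2).
Proof.
  intros Hd. destruct (INR_unbounded (exp (ln 144 / (d - 2)))) as [L0 HL0].
  exists (Nat.max 4 L0). split; [lia|].
  replace 144 with (Rpower (exp (ln 144 / (d - 2))) (d - 2)).
  - apply Rle_Rpower_l; [lra|]. split; [apply exp_pos|].
    left. eapply Rlt_le_trans; [apply HL0 | apply le_INR; lia].
  - unfold Rpower. rewrite ln_exp. replace ((d - 2) * (ln 144 / (d - 2))) with (ln 144)
      by (field; lra). rewrite exp_ln; lra.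
Qed.

Lemma cseq_lim_ratio_0_le (lam : nat -> C) (a : nat -> R) eps :
  (forall n, 0 < a n) -> cseq_lim (fun n => (lam n / RtoC (a n))%C) 0 -> 0 < eps ->
  exists N, forall m, (N <= m)%nat -> Cmod (lam m) <= eps * a m.
Proof.
  intros Ha Hl Heps. apply cseq_lim_Cmod, is_lim_seq_spec in Hl. rewrite Cmod_0 in Hl.
  destruct (Hl (mkposreal eps Heps)) as [N HN]. exists N. intros m Hm.
  specialize (HN m Hm). simpl in HN.
  rewrite Rminus_0_r, Rabs_right, Cmod_div_RtoC in HN by (auto; apply Rle_ge, Cmod_ge_0).
  apply (Rmult_lt_compat_r (a m)) in HN; auto. unfold Rdiv in HN.
  rewrite Rmult_assoc, Rinv_l in HN; generalize (Ha m); lra.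
Qed.

Lemma le_exp_of_Rabs_ln_le x y : 0 < x -> Rabs (ln x) <= y -> x <= exp y.
Proof.
  intros Hx H. rewrite <- (exp_ln x) by auto. apply exp_le_exp.
  generalize (Rle_abs (ln x)). lra.
Qed.

Lemma ex_summable_k (a : nat -> R) (b lam : nat -> C) d :
  (forall n, 0 < a n) -> (forall n m, (n < m)%nat -> a m < a n) -> (forall n, b n <> 0%C) ->
  2 < d -> eventually_decr (pow_seq d a) ->
  (forall eps, 0 < eps -> exists N, forall n, (N <= n)%nat ->
        Rabs (ln (a n / Cmod (b n))) <= eps * INR (S n)) ->
  cseq_lim (fun n => (lam n / RtoC (a n))%C) 0 ->
  exists k : nat -> C, (forall n, k_is a b lam n (k n)) /\ ex_series (fun n => Cmod (k n)).
Proof.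
  intros Ha Hdec Hb Hd [N0 Hdecr] Hln Hlam.
  destruct (exists_L_Rpower_ge d Hd) as [L [HL HL144]].
  set (kap := kappa d). assert (Hk : 0 < kap) by (apply kappa_pos; lra).
  assert (HL2 : 0 < INR L ^ 2) by (apply pow_lt, lt_0_INR; lia).
  assert (Hgap : 0 < exp (- kap / 2) - exp (- kap))
    by (generalize (exp_increasing (- kap) (- kap / 2)); lra).
  assert (HdL : 0 < inv_L_pow d L) by apply Rinv_0_lt_compat, Rpower_pos.
  set (eps := Rmin (inv_L_pow d L)
                (Rmin ((exp (- kap / 2) - exp (- kap)) / INR L ^ 2) (kap / 16 / INR L ^ 2))).
  assert (Heps : 0 < eps) by (repeat apply Rmin_glb_lt; try apply Rdiv_lt_0_compat; lra).
  assert (Hmul : forall c, eps <= c / INR L ^ 2 -> eps * INR L ^ 2 <= c).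
  { intros c Hc. apply (Rmult_le_compat_r (INR L ^ 2)) in Hc; [|lra].
    unfold Rdiv in Hc. rewrite Rmult_assoc, Rinv_l in Hc; lra. }
  destruct (cseq_lim_ratio_0_le lam a eps Ha Hlam Heps) as [N1 HN1].
  destruct (Hln (kap / 64) ltac:(lra)) as [N3 HN3].
  apply (ex_summable_k_of_bounds a lam d (Nat.max N0 N1) L eps); auto.
  - intros i j Hi Hij. apply Hdecr; lia.
  - intros m Hm. apply HN1. lia.
  - apply Rmin_l.
  - apply Hmul. eapply Rle_trans; [apply Rmin_r | apply Rmin_l].
  - apply Hmul. eapply Rle_trans; [apply Rmin_r | apply Rmin_r].
  - exists N3. intros n Hn. apply le_exp_of_Rabs_ln_le; [|apply HN3, Hn].
    apply Rdiv_lt_0_compat; [apply Ha | apply Cmod_gt_0, Hb].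
Qed.

Theorem theorem3 (X : seq_space) (a : nat -> R) (b : nat -> C) :
  valid_space X -> std_a a -> in_space X b -> (forall n, b n <> 0%C) ->
  ((exists d, d < 2 /\ eventually_incr (pow_seq d a)) ->
     ~ (exists lam : nat -> C, in_cH lam /\
          exists k : nat -> C, (forall n, k_is a b lam n (k n)) /\ cbounded k))
  /\
  ((exists d, d > 2 /\ eventually_decr (pow_seq d a)) ->
   (forall eps, 0 < eps -> exists N, forall n, (N <= n)%nat ->
        Rabs (ln (a n / Cmod (b n))) <= eps * INR (S n)) ->
   forall lam : nat -> C, in_cH lam ->
     cseq_lim (fun n => (lam n / RtoC (a n))%C) 0 ->
     exists k : nat -> C, (forall n, k_is a b lam n (k n)) /\
       ex_series (fun n => Cmod (k n))).
Proof.
  intros HX [Ha [Hdec _]] Hb Hb0. split.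
  - intros [d [Hd [N0 Hinc]]] [lam [[_ Hre] [k [Hk Hkb]]]].
    exact (k_not_bounded a d N0 Ha Hdec Hd Hinc b lam k Hb0 (in_space_bounded X b HX Hb)
             Hre Hk Hkb).
  - intros [d [Hd Hdecr]] Hln lam _ Hlam.
    exact (ex_summable_k a b lam d Ha Hdec Hb0 Hd Hdecr Hln Hlam).
Qed.
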